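(* Let $\alpha>1$ and let $h_0\ge0$ be an integer. Let $D_0=[-\lceil h_0^\alpha\rceil,\lceil h_0^\alpha\rceil]\times[0,h_0]$, $U_{h_0}=\{x\in\mathbb{H}:\ |x_1|\ge\lceil h_0^\alpha\rceil,\ x_2\le|x_1|^{1/\alpha}\}$, $\hat W=D_0\cup U_{h_0}$, and $\xi_0=(0,h_0)$. Then there is a constant $c>0$ such that for all sufficiently large $k$, $$P_{\xi_0}\big(\tau_{L_{2^k}}<\tau_{\hat W}\big)\ge c\,2^{-k}\qquad\text{and}\qquad \bar{\mathcal H}_{\hat W,N}(\xi_0)\ge c\ \text{ for all sufficiently large } N.$$
   Context: $\mathbb{H}=\{(x_1,x_2)\in\mathbb{Z}^2:\ x_2\ge 0\}$ and $L_n=\{(x_1,n):x_1\in\mathbb{Z}\}$. $(S_n)_{n\ge0}$ is a simple random walk on $\mathbb{Z}^2$; $P_z$ denotes its law started at $z$. For $A\subset\mathbb{Z}^2$, $\bar\tau_A=\min\{n\ge0: S_n\in A\}$ and $\tau_A=\min\{n\ge1:S_n\in A\}$. For $A\subset\mathbb{H}$, $x\in A$ and $N\ge1$, define $$\bar{\mathcal H}_{A,N}(x)=\sum_{z\in L_N\setminus A}P_z\big(S_{\bar\tau_{A\cup L_0}}=x\big).$$ Integer intervals $[a,b]$ denote $\{a,a+1,\dots,b\}$. *)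

From Stdlib Require Import Reals ZArith Lra Lia Classical ClassicalEpsilon.
Open Scope R_scope.

Definition point : Type := (Z * Z)%type.
Definition zset : Type := point -> Prop.

Definition pif {T : Type} (P : Prop) (a b : T) : T :=
  if excluded_middle_informative P then a else b.

Definition Plim (u : nat -> R) : R :=
  epsilon (inhabits 0) (fun l => Un_cv u l).

Definition avg4 (f : point -> R) (z : point) : R :=
  let '(a, b) := z in
  / 4 * (f ((a + 1)%Z, b) + f ((a - 1)%Z, b) + f (a, (b + 1)%Z) + f (a, (b - 1)%Z)).

Definition HH : zset := fun x => (0 <= snd x)%Z.
Definition Lline (n : Z) : zset := fun x => snd x = n.
Definition setU (A B : zset) : zset := fun x => A x \/ B x.

(* bar-version: probability, starting at z (time 0 counts), that B is hit within
   n steps strictly before A (i.e. bar tau_B < bar tau_A) *)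
Fixpoint barBefore (A B : zset) (n : nat) (z : point) : R :=
  pif (A z) 0 (pif (B z) 1
    (match n with O => 0 | S m => avg4 (barBefore A B m) z end)).

(* P_z(tau_B < tau_A), with tau = first hitting time at times >= 1 *)
Definition ProbBefore (z : point) (B A : zset) : R :=
  Plim (fun n => avg4 (barBefore A B n) z).

(* probability, starting at z, that bar tau_A <= n and S_{bar tau_A} = x *)
Fixpoint hitAt (A : zset) (x : point) (n : nat) (z : point) : R :=
  pif (A z) (pif (z = x) 1 0)
    (match n with O => 0 | S m => avg4 (hitAt A x m) z end).

(* P_z(S_{bar tau_A} = x) *)
Definition HitProb (z : point) (A : zset) (x : point) : R :=
  Plim (fun n => hitAt A x n z).

(* \bar H_{A,N}(x) = sum_{z in L_N \ A} P_z(S_{bar tau_{A u L_0}} = x),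
   the series over z_1 in Z taken as limit of symmetric partial sums
   over z_1 in [-M, M] (nonnegative terms). *)
Definition HbarTerm (A : zset) (N : Z) (x : point) (z1 : Z) : R :=
  pif (A (z1, N)) 0 (HitProb (z1, N) (setU A (Lline 0)) x).

Definition Hbar (A : zset) (N : Z) (x : point) : R :=
  Plim (fun M => sum_f_R0 (fun i => HbarTerm A N x (Z.of_nat i - Z.of_nat M)%Z)
                          (2 * M)).

(* real power x^a for x >= 0, with 0^a = 0 *)
Definition powR (x a : R) : R := pif (x = 0) 0 (Rpower x a).

Definition ceilR (x : R) : Z := (- Int_part (- x))%Z.

Definition D0 (alpha : R) (h0 : Z) : zset := fun x =>
  let c := ceilR (powR (IZR h0) alpha) in
  (- c <= fst x <= c)%Z /\ (0 <= snd x <= h0)%Z.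

Definition Uh0 (alpha : R) (h0 : Z) : zset := fun x =>
  HH x /\ (ceilR (powR (IZR h0) alpha) <= Z.abs (fst x))%Z /\
  IZR (snd x) <= powR (IZR (Z.abs (fst x))) (/ alpha).

Definition What (alpha : R) (h0 : Z) : zset := setU (D0 alpha h0) (Uh0 alpha h0).

From Stdlib Require Import Reals ZArith Lra Lia Classical ClassicalEpsilon List.
Open Scope R_scope.

(* The walk climbs through the dyadic heights [2^j].  From height [2^j], inside the window
   [|x| <= 8 * 2^(j(1+e))] with [e = (alpha - 1) / (2 (alpha + 1))], it reaches height
   [2^(j+1)] inside the next window before the obstacle with probability at least
   [(1 - 2^(-j e)) / 2]: this follows by comparing with the discrete harmonic saddle
   [y - Y - c((x - x0)^2 - (y - 2^j)^2)], which the obstacle cannot see because at height [y]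
   it only starts at [|x| >= y^alpha], far outside the window.  Multiplying over the levels
   below [N], after walking up the axis from [h0] to the first large enough level, gives
   probability [>= c / N] of reaching the line [y = N] first; take [N = 2^k].

   For the second estimate, Green's identity on [{0 < y < 2N} \ What] pairs the harmonic
   function [z |-> P_z(S_tau = (0, h0))] with a test function that is subharmonic up to the
   indicator of the line [y = N] and dominates [N / 4] times the escape probability to that
   line; the left side is at least [(N / 4) (c / N)] and the right side is [4 Hbar]. *)

Lemma pif_true {T : Type} (P : Prop) (a b : T) : P -> pif P a b = a.
Proof. intros H; unfold pif; destruct (excluded_middle_informative P); tauto. Qed.

Lemma pif_false {T : Type} (P : Prop) (a b : T) : ~ P -> pif P a b = b.
Proof. intros H; unfold pif; destruct (excluded_middle_informative P); tauto. Qed.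

Lemma Plim_eq (u : nat -> R) (l : R) : Un_cv u l -> Plim u = l.
Proof.
  intros H. unfold Plim.
  apply (UL_sequence u); [|exact H].
  exact (epsilon_spec (inhabits 0) (fun l => Un_cv u l) (ex_intro _ l H)).
Qed.

Lemma Un_cv_const_eq (u : nat -> R) (c l : R) : (forall n, u n = c) -> Un_cv u l -> l = c.
Proof.
  intros Hu Hl. apply (UL_sequence u); auto.
  intros e He. exists 0%nat. intros n _. rewrite Hu. unfold R_dist.
  rewrite Rminus_diag, Rabs_R0. lra.
Qed.

Lemma Un_cv_succ (u : nat -> R) (l : R) : Un_cv u l -> Un_cv (fun n => u (S n)) l.
Proof.
  intros H. apply (Un_cv_ext (fun n => u (n + 1)%nat)); [|exact (CV_shift' u 1 l H)].
  intros n. rewrite Nat.add_1_r. reflexivity.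
Qed.

Section IncreasingUnit.

Variable u : nat -> R.
Hypothesis u_unit : forall n, 0 <= u n <= 1.
Hypothesis u_incr : forall n, u n <= u (S n).

Lemma Plim_increasing : Un_cv u (Plim u).
Proof.
  destruct (growing_cv u u_incr) as [l Hl].
  { exists 1. intros x [n ->]. apply u_unit. }
  rewrite (Plim_eq u l Hl). exact Hl.
Qed.

Lemma Plim_increasing_ge0 : 0 <= Plim u.
Proof.
  pose proof (growing_ineq u _ u_incr Plim_increasing 0). pose proof (u_unit 0). lra.
Qed.

End IncreasingUnit.

Definition neighbor (z w : point) : Prop :=
  let '(a, b) := z in
  w = ((a + 1)%Z, b) \/ w = ((a - 1)%Z, b) \/ w = (a, (b + 1)%Z) \/ w = (a, (b - 1)%Z).

Lemma avg4_le_compat (f g : point -> R) (z : point) :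
  (forall w, neighbor z w -> f w <= g w) -> avg4 f z <= avg4 g z.
Proof.
  destruct z as [a b]. intros H. unfold avg4.
  pose proof (H _ (or_introl eq_refl)).
  pose proof (H _ (or_intror (or_introl eq_refl))).
  pose proof (H _ (or_intror (or_intror (or_introl eq_refl)))).
  pose proof (H _ (or_intror (or_intror (or_intror eq_refl)))). lra.
Qed.

Lemma avg4_const (c : R) (z : point) : avg4 (fun _ => c) z = c.
Proof. destruct z; unfold avg4; field. Qed.

Lemma avg4_scal (c : R) (f : point -> R) (z : point) :
  avg4 (fun w => c * f w) z = c * avg4 f z.
Proof. destruct z; unfold avg4; ring. Qed.

Lemma avg4_ge0 (f : point -> R) (z : point) : (forall w, 0 <= f w) -> 0 <= avg4 f z.
Proof.
  intros H. rewrite <- (avg4_const 0 z). apply avg4_le_compat. intros w _. apply H.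
Qed.

Lemma avg4_le1 (f : point -> R) (z : point) : (forall w, f w <= 1) -> avg4 f z <= 1.
Proof.
  intros H. rewrite <- (avg4_const 1 z). apply avg4_le_compat. intros w _. apply H.
Qed.

Lemma Un_cv_avg4 (f : nat -> point -> R) (L : point -> R) (z : point) :
  (forall w, Un_cv (fun n => f n w) (L w)) -> Un_cv (fun n => avg4 (f n) z) (avg4 L z).
Proof.
  intros H. destruct z as [a b]. unfold avg4.
  apply CV_mult.
  - intros e He. exists 0%nat. intros. unfold R_dist. rewrite Rminus_diag, Rabs_R0. lra.
  - repeat apply CV_plus; apply H.
Qed.

(** * First-passage probabilities *)

(* [barProbBefore A B z] is [P_z(bar tau_B < bar tau_A)], time 0 included. *)
Definition barProbBefore (A B : zset) (z : point) : R := Plim (fun n => barBefore A B n z).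

Lemma barBefore_O (A B : zset) (z : point) :
  barBefore A B 0 z = pif (A z) 0 (pif (B z) 1 0).
Proof. reflexivity. Qed.

Lemma barBefore_S (A B : zset) (n : nat) (z : point) :
  barBefore A B (S n) z = pif (A z) 0 (pif (B z) 1 (avg4 (barBefore A B n) z)).
Proof. reflexivity. Qed.

Lemma barBefore_unit (A B : zset) (n : nat) (z : point) : 0 <= barBefore A B n z <= 1.
Proof.
  revert z; induction n; intros z; [rewrite barBefore_O | rewrite barBefore_S]; unfold pif;
  destruct (excluded_middle_informative (A z)); try lra;
  destruct (excluded_middle_informative (B z)); try lra.
  split; [apply avg4_ge0 | apply avg4_le1]; intros w; apply IHn.
Qed.

Lemma barBefore_incr (A B : zset) (n : nat) (z : point) :
  barBefore A B n z <= barBefore A B (S n) z.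
Proof.
  revert z; induction n; intros z; [rewrite barBefore_S, barBefore_O | rewrite !barBefore_S];
  unfold pif;
  destruct (excluded_middle_informative (A z)); try lra;
  destruct (excluded_middle_informative (B z)); try lra.
  - apply avg4_ge0. intros; apply barBefore_unit.
  - apply avg4_le_compat. intros; apply IHn.
Qed.

Lemma barProbBefore_cv (A B : zset) (z : point) :
  Un_cv (fun n => barBefore A B n z) (barProbBefore A B z).
Proof. apply Plim_increasing; intros; [apply barBefore_unit | apply barBefore_incr]. Qed.

Lemma barProbBefore_ge0 (A B : zset) (z : point) : 0 <= barProbBefore A B z.
Proof. apply Plim_increasing_ge0; intros; [apply barBefore_unit | apply barBefore_incr]. Qed.

Lemma barProbBefore_in_A (A B : zset) (z : point) : A z -> barProbBefore A B z = 0.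
Proof.
  intros H. apply (Un_cv_const_eq (fun n => barBefore A B n z)); [|apply barProbBefore_cv].
  intros n; destruct n; [rewrite barBefore_O | rewrite barBefore_S]; apply pif_true; auto.
Qed.

Lemma barProbBefore_in_B (A B : zset) (z : point) : ~ A z -> B z -> barProbBefore A B z = 1.
Proof.
  intros HA HB. apply (Un_cv_const_eq (fun n => barBefore A B n z)); [|apply barProbBefore_cv].
  intros n; destruct n; [rewrite barBefore_O | rewrite barBefore_S];
  rewrite pif_false, pif_true; auto.
Qed.

Lemma barProbBefore_harmonic (A B : zset) (z : point) :
  ~ A z -> ~ B z -> barProbBefore A B z = avg4 (barProbBefore A B) z.
Proof.
  intros HA HB. apply (UL_sequence (fun n => barBefore A B (S n) z)).
  - apply (Un_cv_succ (fun n => barBefore A B n z)), barProbBefore_cv.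
  - eapply Un_cv_ext; [|apply (Un_cv_avg4 (barBefore A B)); intros; apply barProbBefore_cv].
    intros n. rewrite barBefore_S, !pif_false; auto.
Qed.

Lemma ProbBefore_avg4 (z : point) (B A : zset) :
  ProbBefore z B A = avg4 (barProbBefore A B) z.
Proof. apply Plim_eq, Un_cv_avg4. intros; apply barProbBefore_cv. Qed.

Lemma hitAt_O (A : zset) (x z : point) : hitAt A x 0 z = pif (A z) (pif (z = x) 1 0) 0.
Proof. reflexivity. Qed.

Lemma hitAt_S (A : zset) (x : point) (n : nat) (z : point) :
  hitAt A x (S n) z = pif (A z) (pif (z = x) 1 0) (avg4 (hitAt A x n) z).
Proof. reflexivity. Qed.

Lemma hitAt_unit (A : zset) (x : point) (n : nat) (z : point) : 0 <= hitAt A x n z <= 1.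
Proof.
  revert z; induction n; intros z; [rewrite hitAt_O | rewrite hitAt_S]; unfold pif;
  destruct (excluded_middle_informative (A z)); try lra;
  destruct (excluded_middle_informative (z = x)); try lra;
  split; try apply avg4_ge0; try apply avg4_le1; intros w; apply IHn.
Qed.

Lemma hitAt_incr (A : zset) (x : point) (n : nat) (z : point) :
  hitAt A x n z <= hitAt A x (S n) z.
Proof.
  revert z; induction n; intros z; [rewrite hitAt_S, hitAt_O | rewrite !hitAt_S]; unfold pif;
  destruct (excluded_middle_informative (A z)); try lra.
  - apply avg4_ge0. intros; apply hitAt_unit.
  - apply avg4_le_compat. intros; apply IHn.
Qed.

Lemma HitProb_cv (z : point) (A : zset) (x : point) :
  Un_cv (fun n => hitAt A x n z) (HitProb z A x).
Proof. apply Plim_increasing; intros; [apply hitAt_unit | apply hitAt_incr]. Qed.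

Lemma HitProb_ge0 (z : point) (A : zset) (x : point) : 0 <= HitProb z A x.
Proof. apply Plim_increasing_ge0; intros; [apply hitAt_unit | apply hitAt_incr]. Qed.

Lemma HitProb_in_A (z : point) (A : zset) (x : point) :
  A z -> HitProb z A x = pif (z = x) 1 0.
Proof.
  intros H. apply (Un_cv_const_eq (fun n => hitAt A x n z)); [|apply HitProb_cv].
  intros n; destruct n; [rewrite hitAt_O | rewrite hitAt_S]; apply pif_true; auto.
Qed.

Lemma HitProb_harmonic (z : point) (A : zset) (x : point) :
  ~ A z -> HitProb z A x = avg4 (fun w => HitProb w A x) z.
Proof.
  intros H. apply (UL_sequence (fun n => hitAt A x (S n) z)).
  - apply (Un_cv_succ (fun n => hitAt A x n z)), HitProb_cv.
  - eapply Un_cv_ext; [|apply (Un_cv_avg4 (hitAt A x)); intros; apply HitProb_cv].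
    intros n. rewrite hitAt_S, pif_false; auto.
Qed.

(** * A comparison principle on finite domains *)

Lemma avg4_le_neighbors (f : point -> R) (z : point) (M : R) :
  (forall w, neighbor z w -> f w <= M) -> avg4 f z <= M.
Proof. intros H. rewrite <- (avg4_const M z). apply avg4_le_compat. exact H. Qed.

Lemma neighbor_height (z w : point) :
  neighbor z w -> Rabs (IZR (snd w)) <= Rabs (IZR (snd z)) + 1.
Proof.
  destruct z as [a b]. intros [E|[E|[E|E]]]; subst w; simpl;
  rewrite ?plus_IZR, ?minus_IZR; split_Rabs; lra.
Qed.

Lemma list_argmax (l : list point) (f : point -> R) (z0 : point) :
  In z0 l -> exists z, In z l /\ forall w, In w l -> f w <= f z.
Proof.
  revert z0; induction l as [|a l IH]; intros z0 H; [destruct H|].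
  destruct l as [|b l'].
  - exists a. split; [left; auto|]. intros w [<-|[]]; lra.
  - destruct (IH b (or_introl eq_refl)) as [z [Hz Hm]].
    destruct (Rle_dec (f a) (f z)).
    + exists z. split; [right; auto|]. intros w [<-|Hw]; auto.
    + exists a. split; [left; auto|]. intros w [<-|Hw]; [lra|]. specialize (Hm w Hw); lra.
Qed.

Lemma finite_argmax (Om : point -> Prop) (l : list point) (f : point -> R) (z0 : point) :
  (forall p, Om p -> In p l) -> Om z0 -> exists z, Om z /\ forall p, Om p -> f p <= f z.
Proof.
  intros Hl Hz0.
  set (lf := filter (fun p => if excluded_middle_informative (Om p) then true else false) l).
  assert (Hin : forall p, In p lf <-> In p l /\ Om p).
  { intros p. unfold lf. rewrite filter_In.
    destruct (excluded_middle_informative (Om p)); intuition congruence. }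
  destruct (list_argmax lf f z0) as [z [Hz Hmax]]; [apply Hin; auto|].
  exists z. split; [apply Hin, Hz|]. intros p Hp. apply Hmax, Hin. auto.
Qed.

Lemma list_height_bound (l : list point) :
  exists M, forall p, In p l -> Rabs (IZR (snd p)) <= M.
Proof.
  induction l as [|a l [M HM]]; [exists 0; intros p []|].
  exists (Rmax (Rabs (IZR (snd a))) M). intros p [<-|Hp]; [apply Rmax_l|].
  eapply Rle_trans; [apply HM, Hp | apply Rmax_r].
Qed.

(* The maximum of [g - v + eps * y^2], strictly subharmonic on [Om], lies on its boundary. *)
Lemma comparison_principle (Om : point -> Prop) (l : list point) (g v : point -> R) :
  (forall z, Om z -> In z l) ->
  (forall z, Om z -> g z <= avg4 g z) ->
  (forall z, Om z -> avg4 v z <= v z) ->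
  (forall z w, Om z -> neighbor z w -> ~ Om w -> g w <= v w) ->
  forall z, Om z -> g z <= v z.
Proof.
  intros Hl Hg Hv Hb z Hz.
  destruct (list_height_bound l) as [M HM].
  assert (HM0 : 0 <= M) by (pose proof (HM z (Hl z Hz)); pose proof (Rabs_pos (IZR (snd z))); lra).
  set (Tb := (M + 1) ^ 2).
  assert (Hbd : forall z w, Om z -> neighbor z w -> IZR (snd w) ^ 2 <= Tb).
  { intros z' w Hz' Hw. pose proof (neighbor_height z' w Hw). pose proof (HM z' (Hl z' Hz')).
    pose proof (Rabs_pos (IZR (snd w))). unfold Tb. rewrite <- pow2_abs. nra. }
  assert (Heps : forall eps, 0 < eps -> g z - v z <= eps * Tb).
  { intros eps He.
    set (w := fun p => g p - v p + eps * IZR (snd p) ^ 2).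
    destruct (finite_argmax Om l w z Hl Hz) as [zs [Hzs Hmax]].
    assert (Havg : w zs + eps / 2 <= avg4 w zs).
    { pose proof (Hg zs Hzs). pose proof (Hv zs Hzs).
      destruct zs as [a b]. unfold w; unfold avg4 in *. simpl in *.
      rewrite ?plus_IZR, ?minus_IZR. lra. }
    assert (Hnb : avg4 w zs <= Rmax (w zs) (eps * Tb)).
    { apply avg4_le_neighbors. intros p Hp. destruct (classic (Om p)) as [Hp'|Hp'].
      - eapply Rle_trans; [apply Hmax; auto | apply Rmax_l].
      - eapply Rle_trans; [|apply Rmax_r].
        pose proof (Hb zs p Hzs Hp Hp'). pose proof (Hbd zs p Hzs Hp). unfold w. nra. }
    assert (Hwz : w z <= w zs) by (apply Hmax; auto).
    assert (g z - v z <= w z) by (unfold w; pose proof (pow2_ge_0 (IZR (snd z))); nra).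
    unfold Rmax in Hnb. destruct (Rle_dec (w zs) (eps * Tb)); lra. }
  assert (HTb : 0 < Tb) by (unfold Tb; nra).
  destruct (Rle_dec (g z - v z) 0) as [|Hpos]; [lra|].
  specialize (Heps ((g z - v z) / (2 * Tb))).
  replace ((g z - v z) / (2 * Tb) * Tb) with ((g z - v z) / 2) in Heps by (field; lra).
  assert (0 < (g z - v z) / (2 * Tb)) by (apply Rdiv_lt_0_compat; lra).
  specialize (Heps ltac:(lra)). lra.
Qed.

(* [zsum a n f] is the sum of [f x] over [a <= x <= a + n] ([n + 1] terms). *)
Definition zsum (a : Z) (n : nat) (f : Z -> R) : R :=
  sum_f_R0 (fun i => f (a + Z.of_nat i)%Z) n.

Lemma zsum_ext (a : Z) (n : nat) (f g : Z -> R) :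
  (forall x, (a <= x <= a + Z.of_nat n)%Z -> f x = g x) -> zsum a n f = zsum a n g.
Proof. intros H. unfold zsum. apply sum_eq. intros i Hi. apply H. lia. Qed.

Lemma zsum_plus (a : Z) (n : nat) (f g : Z -> R) :
  zsum a n (fun x => f x + g x) = zsum a n f + zsum a n g.
Proof. unfold zsum. apply plus_sum. Qed.

Lemma zsum_scal (a : Z) (n : nat) (f : Z -> R) (c : R) :
  zsum a n (fun x => c * f x) = c * zsum a n f.
Proof. unfold zsum. rewrite scal_sum. apply sum_eq. intros; ring. Qed.

Lemma zsum_le (a : Z) (n : nat) (f g : Z -> R) :
  (forall x, (a <= x <= a + Z.of_nat n)%Z -> f x <= g x) -> zsum a n f <= zsum a n g.
Proof. intros H. unfold zsum. apply sum_Rle. intros i Hi. apply H. lia. Qed.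

Lemma zsum_zero (a : Z) (n : nat) (f : Z -> R) :
  (forall x, (a <= x <= a + Z.of_nat n)%Z -> f x = 0) -> zsum a n f = 0.
Proof.
  intros H. rewrite (zsum_ext a n f (fun _ => 0)) by auto. unfold zsum. rewrite sum_cte. ring.
Qed.

Lemma zsum_ge0 (a : Z) (n : nat) (f : Z -> R) :
  (forall x, (a <= x <= a + Z.of_nat n)%Z -> 0 <= f x) -> 0 <= zsum a n f.
Proof. intros H. rewrite <- (zsum_zero a n (fun _ => 0)) by auto. apply zsum_le. auto. Qed.

Lemma zsum_S (a : Z) (n : nat) (f : Z -> R) :
  zsum a (S n) f = zsum a n f + f (a + Z.of_nat (S n))%Z.
Proof. reflexivity. Qed.

Lemma zsum_Sl (a : Z) (n : nat) (f : Z -> R) :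
  zsum a (S n) f = f a + zsum (a + 1) n f.
Proof.
  unfold zsum. rewrite decomp_sum by lia. simpl pred.
  replace (a + Z.of_nat 0)%Z with a by lia. f_equal. apply sum_eq. intros i _. f_equal. lia.
Qed.

Lemma zsum_shift (a : Z) (n : nat) (f : Z -> R) : f a = 0 -> f (a + Z.of_nat n + 1)%Z = 0 ->
  zsum a n (fun x => f (x + 1)%Z) = zsum a n f.
Proof.
  intros H1 H2.
  enough (E : zsum a n (fun x => f (x + 1)%Z) = zsum a n f - f a + f (a + Z.of_nat n + 1)%Z)
    by (rewrite E, H1, H2; ring).
  clear H2. induction n as [|n IH].
  - unfold zsum; simpl. replace (a + 0)%Z with a by lia.
    replace (a + 0 + 1)%Z with (a + 1)%Z by lia. ring.
  - rewrite !zsum_S, IH. replace (a + Z.of_nat (S n) + 1)%Z with (a + Z.of_nat n + 1 + 1)%Z by lia.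
    replace (a + Z.of_nat (S n))%Z with (a + Z.of_nat n + 1)%Z by lia. ring.
Qed.

Lemma zsum_ge_term (a : Z) (n : nat) (f : Z -> R) (x : Z) :
  (forall y, (a <= y <= a + Z.of_nat n)%Z -> 0 <= f y) ->
  (a <= x <= a + Z.of_nat n)%Z -> f x <= zsum a n f.
Proof.
  intros H Hx. induction n as [|n IH].
  - unfold zsum; simpl. replace x with (a + 0)%Z by lia. lra.
  - rewrite zsum_S. destruct (Z.eq_dec x (a + Z.of_nat (S n))%Z) as [->|Hne].
    + assert (0 <= zsum a n f) by (apply zsum_ge0; intros; apply H; lia). lra.
    + assert (f x <= zsum a n f) by (apply IH; [intros; apply H | ]; lia).
      assert (0 <= f (a + Z.of_nat (S n))%Z) by (apply H; lia). lra.
Qed.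

Lemma zsum_single (a : Z) (n : nat) (f : Z -> R) (x0 : Z) :
  (a <= x0 <= a + Z.of_nat n)%Z -> (forall x, x <> x0 -> f x = 0) -> zsum a n f = f x0.
Proof.
  intros Hx H. induction n as [|n IH].
  - unfold zsum; simpl. f_equal; lia.
  - rewrite zsum_S. destruct (Z.eq_dec x0 (a + Z.of_nat (S n))%Z) as [E|Hne].
    + rewrite (zsum_zero a n f); [rewrite <- E; ring|]. intros x Hx'. apply H. lia.
    + rewrite IH by lia. rewrite (H (a + Z.of_nat (S n))%Z) by lia. ring.
Qed.

Definition boxsum (X Y : Z) (F : point -> R) : R :=
  zsum (- X) (Z.to_nat (2 * X)) (fun x => zsum 0 (Z.to_nat Y) (fun y => F (x, y))).

Lemma boxsum_plus (X Y : Z) (F G : point -> R) :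
  boxsum X Y (fun z => F z + G z) = boxsum X Y F + boxsum X Y G.
Proof. unfold boxsum. rewrite <- zsum_plus. apply zsum_ext. intros. apply zsum_plus. Qed.

Lemma boxsum_le (X Y : Z) (F G : point -> R) :
  (forall z, F z <= G z) -> boxsum X Y F <= boxsum X Y G.
Proof. intros H. unfold boxsum. apply zsum_le. intros. apply zsum_le. auto. Qed.

Lemma boxsum_ext (X Y : Z) (F G : point -> R) :
  (forall z, F z = G z) -> boxsum X Y F = boxsum X Y G.
Proof. intros H. unfold boxsum. apply zsum_ext. intros. apply zsum_ext. auto. Qed.

Lemma boxsum_scal (X Y : Z) (F : point -> R) (c : R) :
  boxsum X Y (fun z => c * F z) = c * boxsum X Y F.
Proof. unfold boxsum. rewrite <- zsum_scal. apply zsum_ext. intros. apply zsum_scal. Qed.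

Lemma boxsum_opp (X Y : Z) (F : point -> R) : boxsum X Y (fun z => - F z) = - boxsum X Y F.
Proof.
  rewrite <- (Rmult_1_l (boxsum X Y F)), Ropp_mult_distr_l, <- boxsum_scal.
  apply boxsum_ext. intros; ring.
Qed.

Lemma boxsum_shift_x (X Y : Z) (F : point -> R) : (0 <= X)%Z ->
  (forall y, F ((- X)%Z, y) = 0) -> (forall y, F ((X + 1)%Z, y) = 0) ->
  boxsum X Y (fun z => F ((fst z + 1)%Z, snd z)) = boxsum X Y F.
Proof.
  intros HX H1 H2. unfold boxsum. simpl.
  apply (zsum_shift (- X) (Z.to_nat (2 * X)) (fun x => zsum 0 (Z.to_nat Y) (fun y => F (x, y)))).
  - apply zsum_zero. intros; apply H1.
  - apply zsum_zero. intros.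
    replace (- X + Z.of_nat (Z.to_nat (2 * X)) + 1)%Z with (X + 1)%Z by lia. apply H2.
Qed.

Lemma boxsum_shift_y (X Y : Z) (F : point -> R) : (0 <= Y)%Z ->
  (forall x, F (x, 0%Z) = 0) -> (forall x, F (x, (Y + 1)%Z) = 0) ->
  boxsum X Y (fun z => F (fst z, (snd z + 1)%Z)) = boxsum X Y F.
Proof.
  intros HY H1 H2. unfold boxsum. simpl. apply zsum_ext. intros x _.
  apply (zsum_shift 0 (Z.to_nat Y) (fun y => F (x, y))); [apply H1|].
  replace (0 + Z.of_nat (Z.to_nat Y) + 1)%Z with (Y + 1)%Z by lia. apply H2.
Qed.

Lemma boxsum_ge_term (X Y : Z) (F : point -> R) (x y : Z) :
  (forall z, 0 <= F z) -> (Z.abs x <= X)%Z -> (0 <= y <= Y)%Z -> F (x, y) <= boxsum X Y F.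
Proof.
  intros HF Hx Hy. unfold boxsum.
  apply Rle_trans with (zsum 0 (Z.to_nat Y) (fun y0 => F (x, y0))).
  - apply (zsum_ge_term 0 (Z.to_nat Y) (fun y0 => F (x, y0))); [intros; apply HF | lia].
  - apply (zsum_ge_term (- X) (Z.to_nat (2 * X))
             (fun x0 => zsum 0 (Z.to_nat Y) (fun y0 => F (x0, y0)))); [|lia].
    intros. apply zsum_ge0. intros; apply HF.
Qed.

(** * Green's identity *)

Definition nbsum (z : point) (G : point -> R) : R :=
  let '(a, b) := z in G ((a + 1)%Z, b) + G ((a - 1)%Z, b) + G (a, (b + 1)%Z) + G (a, (b - 1)%Z).

Section Green.

Variables (Om : point -> Prop) (X Y : Z) (phi h : point -> R).
Hypothesis X_ge0 : (0 <= X)%Z.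
Hypothesis Y_ge0 : (0 <= Y)%Z.
Hypothesis Om_box : forall z, Om z -> (Z.abs (fst z) < X)%Z /\ (0 < snd z < Y)%Z.
Hypothesis h_harmonic : forall z, Om z -> h z = avg4 h z.

Definition boundary_flux (z : point) : R :=
  pif (Om z) (nbsum z (fun w => pif (Om w) 0 (phi z * h w - h z * phi w))) 0.

(* The flux [phi z h w - h z phi w] across interior edges is antisymmetric, so summing
   the pointwise identity over [Om] leaves only the edges leaving [Om]. *)
Lemma green_identity :
  boxsum X Y boundary_flux = boxsum X Y (fun z => pif (Om z) (4 * (h z * (phi z - avg4 phi z))) 0).
Proof.
  set (A := fun z w => pif (Om z) (pif (Om w) (phi z * h w - h z * phi w) 0) 0).
  assert (Hanti : forall z w, A w z = - A z w).
  { intros z w. unfold A, pif.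
    destruct (excluded_middle_informative (Om z)); destruct (excluded_middle_informative (Om w));
    ring. }
  assert (Hout : forall z w, ~ Om z -> A z w = 0)
    by (intros z w H; unfold A; rewrite pif_false; auto).
  assert (Hpt : forall z, pif (Om z) (4 * (h z * (phi z - avg4 phi z))) 0 =
     boundary_flux z + (A z ((fst z + 1)%Z, snd z) + A z ((fst z - 1)%Z, snd z)
                        + A z (fst z, (snd z + 1)%Z) + A z (fst z, (snd z - 1)%Z))).
  { intros [a b]. simpl. unfold A, boundary_flux. destruct (classic (Om (a, b))) as [Ho|Ho].
    - rewrite !(pif_true (Om (a, b))) by auto. pose proof (h_harmonic _ Ho) as E.
      unfold avg4 in *. unfold nbsum, pif.
      destruct (excluded_middle_informative (Om ((a + 1)%Z, b)));
      destruct (excluded_middle_informative (Om ((a - 1)%Z, b)));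
      destruct (excluded_middle_informative (Om (a, (b + 1)%Z)));
      destruct (excluded_middle_informative (Om (a, (b - 1)%Z))); rewrite E; field.
    - rewrite !(pif_false (Om (a, b))) by auto. ring. }
  rewrite (boxsum_ext _ _ _ _ Hpt), !boxsum_plus.
  assert (Ex : boxsum X Y (fun z => A z ((fst z - 1)%Z, snd z))
               = - boxsum X Y (fun z => A z ((fst z + 1)%Z, snd z))).
  { rewrite <- (boxsum_shift_x X Y (fun z => A z ((fst z - 1)%Z, snd z))); auto.
    - rewrite <- boxsum_opp. apply boxsum_ext. intros [a b]. simpl.
      replace (a + 1 - 1)%Z with a by lia. rewrite Hanti. ring.
    - intros y. apply Hout. intros Ho. apply Om_box in Ho. simpl in Ho. lia.
    - intros y. apply Hout. intros Ho. apply Om_box in Ho. simpl in Ho. lia. }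
  assert (Ey : boxsum X Y (fun z => A z (fst z, (snd z - 1)%Z))
               = - boxsum X Y (fun z => A z (fst z, (snd z + 1)%Z))).
  { rewrite <- (boxsum_shift_y X Y (fun z => A z (fst z, (snd z - 1)%Z))); auto.
    - rewrite <- boxsum_opp. apply boxsum_ext. intros [a b]. simpl.
      replace (b + 1 - 1)%Z with b by lia. rewrite Hanti. ring.
    - intros x. apply Hout. intros Ho. apply Om_box in Ho. simpl in Ho. lia.
    - intros x. apply Hout. intros Ho. apply Om_box in Ho. simpl in Ho. lia. }
  rewrite Ex, Ey. ring.
Qed.

Hypothesis h_ge0 : forall z, 0 <= h z.
Hypothesis phi_ge0 : forall z, 0 <= phi z.
Hypothesis phi_boundary : forall z w, Om z -> neighbor z w -> ~ Om w -> phi w = 0.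

Lemma boundary_edge_le_flux (z w : point) : Om z -> neighbor z w -> ~ Om w ->
  phi z * h w <= boxsum X Y boundary_flux.
Proof.
  intros Hz Hw Hnw.
  assert (Hedge : forall z w, Om z -> neighbor z w ->
            0 <= pif (Om w) 0 (phi z * h w - h z * phi w)).
  { intros z' w' Hz' Hw'. unfold pif. destruct (excluded_middle_informative (Om w')); [lra|].
    rewrite (phi_boundary z' w') by auto. pose proof (phi_ge0 z'); pose proof (h_ge0 w'). nra. }
  assert (Hnbsum : forall z, Om z -> forall w, neighbor z w ->
            pif (Om w) 0 (phi z * h w - h z * phi w) <= boundary_flux z).
  { intros [a b] Ho w' Hw'. unfold boundary_flux, nbsum. rewrite (pif_true (Om (a, b))) by auto.
    pose proof (Hedge _ _ Ho (or_introl eq_refl)).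
    pose proof (Hedge _ _ Ho (or_intror (or_introl eq_refl))).
    pose proof (Hedge _ _ Ho (or_intror (or_intror (or_introl eq_refl)))).
    pose proof (Hedge _ _ Ho (or_intror (or_intror (or_intror eq_refl)))).
    destruct Hw' as [E|[E|[E|E]]]; subst w'; lra. }
  assert (Hterms : forall z, 0 <= boundary_flux z).
  { intros [a b]. destruct (classic (Om (a, b))) as [Ho|Ho];
      [| unfold boundary_flux; rewrite pif_false by auto; lra].
    eapply Rle_trans; [|apply (Hnbsum _ Ho ((a + 1)%Z, b)); left; auto].
    apply Hedge; [auto | left; auto]. }
  destruct z as [a b]. destruct (Om_box _ Hz) as [Ha Hb]. simpl in Ha, Hb.
  eapply Rle_trans; [|apply (boxsum_ge_term X Y _ a b); auto; lia].
  eapply Rle_trans; [|apply (Hnbsum _ Hz w Hw)].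
  rewrite pif_false, (phi_boundary _ w Hz Hw Hnw) by auto. lra.
Qed.

Lemma defect_sum_le_line (N : Z) : (0 <= N <= Y)%Z ->
  (forall z, Om z -> phi z - avg4 phi z <= pif (snd z = N) 1 0) ->
  boxsum X Y (fun z => pif (Om z) (4 * (h z * (phi z - avg4 phi z))) 0)
  <= 4 * zsum (- X) (Z.to_nat (2 * X)) (fun x => pif (Om (x, N)) (h (x, N)) 0).
Proof.
  intros HN Hdefect.
  eapply Rle_trans.
  - apply (boxsum_le _ _ _ (fun z => 4 * pif (snd z = N) (pif (Om z) (h z) 0) 0)).
    intros z. unfold pif at 1. destruct (excluded_middle_informative (Om z)) as [Ho|Ho].
    + pose proof (Hdefect z Ho). pose proof (h_ge0 z). unfold pif in *.
      destruct (excluded_middle_informative (snd z = N));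
      destruct (excluded_middle_informative (Om z)); try tauto; nra.
    + unfold pif. destruct (excluded_middle_informative (snd z = N)); [|lra].
      destruct (excluded_middle_informative (Om z)); [tauto | lra].
  - rewrite boxsum_scal. apply Rmult_le_compat_l; [lra|]. unfold boxsum. right.
    apply zsum_ext. intros x _. rewrite (zsum_single 0 _ _ N); [|lia|].
    + simpl. rewrite pif_true by auto. reflexivity.
    + intros y Hy. simpl. rewrite pif_false by auto. reflexivity.
Qed.

End Green.

(** * Geometry of the obstacle [What] *)

Lemma powR_ge0 (x a : R) : 0 <= powR x a.
Proof.
  unfold powR, pif. destruct (excluded_middle_informative (x = 0)); [lra|].
  left; apply exp_pos.
Qed.

Lemma ceilR_ge0 (x : R) : 0 <= x -> (0 <= ceilR x)%Z.
Proof.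
  intros H. unfold ceilR. destruct (base_Int_part (- x)) as [H1 _].
  assert (Int_part (- x) <= 0)%Z by (apply le_IZR; lra). lia.
Qed.

Section ObstacleGeometry.

Variables (alpha : R) (h0 : Z).
Hypothesis alpha_gt1 : 1 < alpha.
Hypothesis h0_ge0 : (0 <= h0)%Z.

Let W := What alpha h0.
Let c0 := ceilR (powR (IZR h0) alpha).

Lemma c0_ge0 : (0 <= c0)%Z.
Proof. apply ceilR_ge0, powR_ge0. Qed.

Lemma What_bottom (x : Z) : W (x, 0%Z).
Proof.
  unfold W, What, setU, D0, Uh0, HH. fold c0. simpl.
  destruct (Z_le_gt_dec (Z.abs x) c0).
  - left. split; lia.
  - right. repeat split; try lia. apply powR_ge0.
Qed.

Lemma What_start : W (0%Z, h0).
Proof. left. unfold D0. fold c0. simpl. pose proof c0_ge0. lia. Qed.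

Lemma What_high (x y : Z) : W (x, y) -> (h0 < y)%Z -> Rpower (IZR y) alpha <= IZR (Z.abs x).
Proof.
  intros HW Hy. unfold W, What, setU, D0, Uh0 in HW. simpl in HW.
  destruct HW as [[_ H]|[_ [_ H]]]; [lia|].
  assert (Hyp : 0 < IZR y) by (apply IZR_lt; lia).
  unfold powR, pif in H.
  destruct (excluded_middle_informative (IZR (Z.abs x) = 0)) as [E|E]; [lra|].
  assert (Hx : 0 < IZR (Z.abs x)) by (assert (0 <= IZR (Z.abs x)) by (apply IZR_le; lia); lra).
  replace (IZR (Z.abs x)) with (Rpower (Rpower (IZR (Z.abs x)) (/ alpha)) alpha).
  - apply Rle_Rpower_l; lra.
  - rewrite Rpower_mult, Rinv_l by lra. apply Rpower_1; auto.
Qed.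

Lemma What_axis (y : Z) : (h0 < y)%Z -> ~ W (0%Z, y).
Proof.
  intros Hy HW. unfold W, What, setU, D0, Uh0 in HW. simpl in HW.
  destruct HW as [[_ H]|[_ [_ H]]]; [lia|].
  unfold powR in H. rewrite pif_true in H by reflexivity.
  assert (0 < IZR y) by (apply IZR_lt; lia). lra.
Qed.

Lemma What_far (T : Z) : (0 <= T)%Z ->
  exists X, (0 <= X)%Z /\ forall z, (0 <= snd z <= T)%Z -> (X < Z.abs (fst z))%Z -> W z.
Proof.
  intros HT.
  exists (Z.max c0 (Z.max 0 (up (Rpower (IZR T + 1) alpha)))). split; [lia|].
  intros [x y] Hy Hx. simpl in *. right. unfold Uh0, HH. simpl. fold c0.
  split; [lia|]. split; [lia|].
  assert (Hxp : 0 < IZR (Z.abs x)) by (apply IZR_lt; lia).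
  unfold powR. rewrite pif_false by lra.
  destruct (archimed (Rpower (IZR T + 1) alpha)) as [Hu _].
  assert (Hl : Rpower (IZR T + 1) alpha <= IZR (Z.abs x)).
  { left. eapply Rlt_le_trans; [apply Hu|]. apply IZR_le; lia. }
  assert (HT1 : 0 < IZR T + 1) by (assert (0 <= IZR T) by (apply IZR_le; lia); lra).
  assert (Hinv : 0 <= / alpha) by (left; apply Rinv_0_lt_compat; lra).
  pose proof (Rle_Rpower_l _ _ _ Hinv (conj (exp_pos _ : 0 < Rpower (IZR T + 1) alpha) Hl)) as Hl'.
  rewrite Rpower_mult, Rinv_r, Rpower_1 in Hl' by lra.
  assert (IZR y <= IZR T) by (apply IZR_le; lia). lra.
Qed.

End ObstacleGeometry.

Definition dyad (j : nat) : Z := (2 ^ Z.of_nat j)%Z.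

Lemma ln2_pos : 0 < ln 2.
Proof. pose proof ln_lt_2. lra. Qed.

Lemma exp_le_mono (a b : R) : a <= b -> exp a <= exp b.
Proof. intros [H|H]; [left; apply exp_increasing; auto | subst; lra]. Qed.

Lemma dyad_exp (j : nat) : IZR (dyad j) = exp (INR j * ln 2).
Proof.
  unfold dyad. rewrite <- pow_IZR, <- ln_pow by lra. rewrite exp_ln; auto.
  apply pow_lt; lra.
Qed.

Lemma dyad_pos (j : nat) : (0 < dyad j)%Z.
Proof. apply lt_IZR. rewrite dyad_exp. apply exp_pos. Qed.

Lemma dyad_S (j : nat) : dyad (S j) = (2 * dyad j)%Z.
Proof. unfold dyad. rewrite Nat2Z.inj_succ, Z.pow_succ_r; lia. Qed.

Lemma dyad_mono (i j : nat) : (i <= j)%nat -> (dyad i <= dyad j)%Z.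
Proof. intros H. unfold dyad. apply Z.pow_le_mono_r; lia. Qed.

Definition level (N : Z) : nat := Z.to_nat (Z.log2 N - 1).

Lemma level_spec (N : Z) : (2 <= N)%Z -> (2 * dyad (level N) <= N < 4 * dyad (level N))%Z.
Proof.
  intros H. unfold dyad, level. destruct (Z.log2_spec N ltac:(lia)) as [H1 H2].
  assert (1 <= Z.log2 N)%Z by (change 1%Z with (Z.log2 2); apply Z.log2_le_mono; lia).
  rewrite Z2Nat.id by lia.
  replace (2 * 2 ^ (Z.log2 N - 1))%Z with (2 ^ Z.log2 N)%Z
    by (rewrite <- Z.pow_succ_r by lia; f_equal; lia).
  replace (4 * 2 ^ (Z.log2 N - 1))%Z with (2 ^ Z.succ (Z.log2 N))%Z
    by (replace (Z.succ (Z.log2 N)) with (2 + (Z.log2 N - 1))%Z by lia;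
        rewrite Z.pow_add_r by lia; reflexivity).
  lia.
Qed.

Lemma level_ge (J0 : nat) (N : Z) : (dyad (S J0) <= N)%Z -> (J0 <= level N)%nat.
Proof.
  intros HN. assert (HN2 : (2 <= N)%Z) by (rewrite dyad_S in HN; pose proof (dyad_pos J0); lia).
  pose proof (level_spec N HN2).
  destruct (le_lt_dec J0 (level N)) as [|Hlt]; auto. exfalso.
  pose proof (dyad_mono (S (level N)) J0 Hlt) as Hm. rewrite dyad_S in Hm, HN. lia.
Qed.

Definition eventually (P : nat -> Prop) : Prop := exists J0, forall j, (J0 <= j)%nat -> P j.

Lemma eventually_and (P Q : nat -> Prop) :
  eventually P -> eventually Q -> eventually (fun j => P j /\ Q j).
Proof.
  intros [J1 H1] [J2 H2]. exists (J1 + J2)%nat. intros j Hj. split; [apply H1 | apply H2]; lia.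
Qed.

Lemma eventually_exp_ge (a M : R) : 0 < a -> eventually (fun j => M <= exp (INR j * a)).
Proof.
  intros Ha. destruct (archimed (M / a)) as [Hup _].
  exists (Z.to_nat (up (M / a))). intros j Hj.
  apply le_INR in Hj. rewrite INR_IZR_INZ in Hj.
  assert (Hj' : M / a <= INR j).
  { destruct (Z_le_gt_dec 0 (up (M / a))).
    - rewrite Z2Nat.id in Hj by lia. lra.
    - assert (IZR (up (M / a)) < 0) by (apply IZR_lt; lia). pose proof (pos_INR j). lra. }
  apply Rmult_le_compat_r with (r := a) in Hj'; [|lra].
  unfold Rdiv in Hj'. rewrite Rmult_assoc, Rinv_l, Rmult_1_r in Hj' by lra.
  pose proof (exp_ineq1_le (INR j * a)). lra.
Qed.

(* At level [j], with [y0 = 2^j] and [e = exponent_gap], the barrier uses the horizontal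
   scale [width j = y0^(1+e)] and the height [low_height j = y0^(1-e)] below which the obstacle
   is ignored.  Taking [e] half of [(alpha - 1) / (alpha + 1)] makes [width j] eventually much
   smaller than [(low_height j / 2)^alpha], the half-width of the obstacle at height
   [low_height j / 2], while keeping [y0^3 <= low_height j * width j ^ 2]. *)
Section Scales.

Variable alpha : R.
Hypothesis alpha_gt1 : 1 < alpha.

Definition exponent_gap : R := (alpha - 1) / (2 * (alpha + 1)).
Definition width (j : nat) : R := exp (INR j * ((1 + exponent_gap) * ln 2)).
Definition low_height (j : nat) : R := exp (INR j * ((1 - exponent_gap) * ln 2)).
Definition rho (j : nat) : R := exp (- (INR j * (exponent_gap * ln 2))).
Definition lam : R := exp (exponent_gap * ln 2).
(* [kap * rho j] is the sum of the geometric series [rho j + rho (j + 1) + ...]. *)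
Definition kap : R := lam / (lam - 1).

Lemma exponent_gap_bounds : 0 < exponent_gap < 1 / 2.
Proof.
  unfold exponent_gap. split; [apply Rdiv_lt_0_compat; lra|].
  apply Rmult_lt_reg_r with (2 * (alpha + 1)); [lra|].
  unfold Rdiv. rewrite Rmult_assoc, Rinv_l by lra. lra.
Qed.

Lemma scale_exponents_ge0 (j : nat) : 0 <= INR j * (exponent_gap * ln 2) /\ 0 <= INR j * ln 2.
Proof.
  pose proof exponent_gap_bounds. pose proof ln2_pos. pose proof (pos_INR j).
  split; apply Rmult_le_pos; try lra. apply Rmult_le_pos; lra.
Qed.

Lemma dyad_le_width (j : nat) : IZR (dyad j) <= width j.
Proof. rewrite dyad_exp. apply exp_le_mono. pose proof (scale_exponents_ge0 j). nra. Qed.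

Lemma low_height_le_dyad (j : nat) : low_height j <= IZR (dyad j).
Proof. rewrite dyad_exp. apply exp_le_mono. pose proof (scale_exponents_ge0 j). nra. Qed.

Lemma width_pos (j : nat) : 0 < width j.
Proof. apply exp_pos. Qed.

Lemma low_height_pos (j : nat) : 0 < low_height j.
Proof. apply exp_pos. Qed.

Lemma dyad_cube_le (j : nat) : IZR (dyad j) ^ 3 <= low_height j * width j ^ 2.
Proof.
  rewrite dyad_exp. unfold low_height, width. simpl. rewrite !Rmult_1_r, <- !exp_plus.
  apply exp_le_mono. pose proof (scale_exponents_ge0 j). nra.
Qed.

Lemma low_height_eq (j : nat) : low_height j = rho j * IZR (dyad j).
Proof. rewrite dyad_exp. unfold low_height, rho. rewrite <- exp_plus. f_equal. ring. Qed.

Lemma width_S_bounds (j : nat) : 2 * width j <= width (S j) <= 4 * width j.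
Proof.
  unfold width. rewrite S_INR.
  replace ((INR j + 1) * ((1 + exponent_gap) * ln 2))
    with (INR j * ((1 + exponent_gap) * ln 2) + (1 + exponent_gap) * ln 2) by ring.
  rewrite exp_plus, (Rmult_comm 2), (Rmult_comm 4).
  pose proof exponent_gap_bounds. pose proof ln2_pos.
  pose proof (exp_pos (INR j * ((1 + exponent_gap) * ln 2))).
  split; apply Rmult_le_compat_l; try lra.
  - rewrite <- (exp_ln 2) at 1 by lra. apply exp_le_mono. nra.
  - replace 4 with (exp (ln 2 + ln 2)) by (rewrite exp_plus, exp_ln; lra).
    apply exp_le_mono. nra.
Qed.

Lemma rho_pos (j : nat) : 0 < rho j.
Proof. apply exp_pos. Qed.

Lemma rho_S (j : nat) : rho (S j) * lam = rho j.
Proof. unfold rho, lam. rewrite S_INR, <- exp_plus. f_equal. ring. Qed.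

Lemma lam_gt1 : 1 < lam.
Proof.
  unfold lam. rewrite <- exp_0. apply exp_increasing.
  pose proof exponent_gap_bounds. pose proof ln2_pos. nra.
Qed.

Lemma kap_ge1 : 1 <= kap.
Proof.
  pose proof lam_gt1. unfold kap.
  apply Rmult_le_reg_r with (lam - 1); [lra|].
  unfold Rdiv. rewrite Rmult_assoc, Rinv_l by lra. lra.
Qed.

(* Telescoping form of [prod_(i >= j) (1 - rho i) >= 1 - kap * rho j]. *)
Lemma rho_product_step (j : nat) : 1 - kap * rho j <= (1 - kap * rho (S j)) * (1 - rho j).
Proof.
  pose proof lam_gt1 as Hl. pose proof (rho_S j) as Hr. pose proof (rho_pos (S j)).
  pose proof kap_ge1.
  set (r := rho (S j)) in *. set (L := lam) in *. rewrite <- Hr. unfold kap. fold L.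
  assert (E : L / (L - 1) * (r * L) = L / (L - 1) * r + r * L) by (field; lra).
  assert (0 <= L / (L - 1) * r * (r * L)).
  { apply Rmult_le_pos; [|nra]. apply Rmult_le_pos; [|lra]. unfold Rdiv.
    apply Rmult_le_pos; [lra|]. left; apply Rinv_0_lt_compat; lra. }
  nra.
Qed.

Lemma eventually_width_small (C : R) :
  eventually (fun j => C * width j <= Rpower (low_height j / 2) alpha).
Proof.
  pose proof exponent_gap_bounds. pose proof ln2_pos.
  assert (Hk : 0 < ln 2 * (alpha - 1) / 2) by (apply Rdiv_lt_0_compat; nra).
  destruct (eventually_exp_ge _ (C * Rpower 2 alpha) Hk) as [J0 HJ].
  exists J0. intros j Hj. specialize (HJ j Hj).
  assert (E : Rpower (low_height j / 2) alpha
              = exp (INR j * (ln 2 * (alpha - 1) / 2)) * width j / Rpower 2 alpha).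
  { unfold Rpower, low_height, width, Rdiv.
    rewrite ln_mult, ln_exp, ln_Rinv by (try apply exp_pos; lra).
    rewrite <- exp_Ropp, <- !exp_plus. f_equal. unfold exponent_gap. field. lra. }
  rewrite E. unfold Rpower in *. pose proof (exp_pos (alpha * ln 2)). pose proof (width_pos j).
  apply Rmult_le_reg_r with (exp (alpha * ln 2)); [lra|].
  replace (exp (INR j * (ln 2 * (alpha - 1) / 2)) * width j / exp (alpha * ln 2)
           * exp (alpha * ln 2))
    with (exp (INR j * (ln 2 * (alpha - 1) / 2)) * width j) by (field; lra).
  nra.
Qed.

Lemma eventually_low_height_ge (M : R) : eventually (fun j => M <= low_height j / 2).
Proof.
  pose proof exponent_gap_bounds. pose proof ln2_pos.
  destruct (eventually_exp_ge ((1 - exponent_gap) * ln 2) (2 * M) ltac:(nra)) as [J0 HJ].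
  exists J0. intros j Hj. specialize (HJ j Hj). unfold low_height. lra.
Qed.

Lemma eventually_kap_rho : eventually (fun j => kap * rho j <= 1 / 2).
Proof.
  pose proof exponent_gap_bounds. pose proof ln2_pos. pose proof kap_ge1.
  destruct (eventually_exp_ge (exponent_gap * ln 2) (2 * kap) ltac:(nra)) as [J0 HJ].
  exists J0. intros j Hj. specialize (HJ j Hj).
  unfold rho. rewrite exp_Ropp. pose proof (exp_pos (INR j * (exponent_gap * ln 2))).
  apply Rmult_le_reg_r with (exp (INR j * (exponent_gap * ln 2))); [lra|].
  rewrite Rmult_assoc, Rinv_l by lra. lra.
Qed.

End Scales.

(** * The saddle barrier *)

Definition saddle (x0 y0 : Z) (Y c : R) (z : point) : R :=
  IZR (snd z) - Y - c * (IZR (fst z - x0) ^ 2 - IZR (snd z - y0) ^ 2).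

Lemma saddle_harmonic (x0 y0 : Z) (Y c : R) (z : point) :
  avg4 (saddle x0 y0 Y c) z = saddle x0 y0 Y c z.
Proof. destruct z as [a b]. unfold avg4, saddle; simpl. rewrite ?minus_IZR, ?plus_IZR. field. Qed.

Section Barrier.

Variables (W : zset) (v : point -> R) (x0 y0 T : Z) (Y c Q B : R).
Hypothesis y0_pos : (0 < y0)%Z.
Hypothesis T_ge : (2 * y0 <= T)%Z.
Hypothesis c_pos : 0 < c.
Hypothesis Q_ge0 : 0 <= Q.
Hypothesis Y_le_y0 : Y <= IZR y0.
Hypothesis c_y0 : c * IZR y0 ^ 2 <= Y / 2.
Hypothesis c_T : c * IZR (T - y0) ^ 2 <= Y.
Hypothesis W_high_far : forall z, W z -> (0 <= snd z <= T)%Z -> Y / 2 < IZR (snd z) ->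
  IZR T <= c * (IZR (fst z - x0) ^ 2 - IZR (T - y0) ^ 2).
Hypothesis top_far : forall x, B < IZR (Z.abs x) ->
  IZR T <= c * (IZR (x - x0) ^ 2 - IZR (T - y0) ^ 2).
Hypothesis W_bounded : exists X, forall z, (0 <= snd z <= T)%Z -> (X < Z.abs (fst z))%Z -> W z.
Hypothesis W_bottom : forall x, W (x, 0%Z).
Hypothesis v_ge0 : forall z, 0 <= v z.
Hypothesis v_W : forall z, W z -> v z = 0.
Hypothesis v_harmonic : forall z, (0 < snd z < T)%Z -> ~ W z -> v z = avg4 v z.
Hypothesis v_top : forall x, ~ W (x, T) -> IZR (Z.abs x) <= B -> Q <= v (x, T).

Let s := saddle x0 y0 Y c.

Lemma saddle_nonpos_on_W (z : point) : W z -> (0 <= snd z <= T)%Z -> s z <= 0.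
Proof.
  destruct z as [x y]. intros HW Hy. unfold s, saddle; simpl in Hy |- *.
  assert (Hyr : 0 <= IZR y <= IZR T) by (split; apply IZR_le; lia).
  assert (Hy0 : 0 < IZR y0) by (apply IZR_lt; lia).
  assert (HT : 2 * IZR y0 <= IZR T) by (rewrite <- mult_IZR; apply IZR_le; lia).
  pose proof (pow2_ge_0 (IZR (x - x0))). rewrite !minus_IZR in *.
  assert (HY : 0 <= Y) by (pose proof (pow2_ge_0 (IZR y0)); nra).
  destruct (Rle_dec (IZR y) (Y / 2)).
  - assert ((IZR y - IZR y0) ^ 2 <= IZR y0 ^ 2) by nra. nra.
  - specialize (W_high_far (x, y) HW Hy ltac:(simpl; lra)). simpl in W_high_far.
    rewrite !minus_IZR in W_high_far.
    assert ((IZR y - IZR y0) ^ 2 <= (IZR T - IZR y0) ^ 2) by nra. nra.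
Qed.

Lemma saddle_top (x : Z) : s (x, T) <= IZR T /\ (B < IZR (Z.abs x) -> s (x, T) <= 0).
Proof.
  unfold s, saddle; simpl. pose proof (pow2_ge_0 (IZR (x - x0))).
  split; [nra|]. intros Hx. specialize (top_far x Hx). nra.
Qed.

(* Comparison with the harmonic [Q / T * saddle] on the strip [0 < y < T] minus [W]: the
   saddle is nonpositive on [W] (below height [Y / 2] because [c * y0^2 <= Y / 2], above it
   because there [W] is far from [x0]), and on the line [y = T] it is at most [T], and even
   nonpositive outside the window [|x| <= B]. *)
Lemma barrier_lower_bound : ~ W (x0, y0) -> Q / IZR T * (IZR y0 - Y) <= v (x0, y0).
Proof.
  intros Hz0.
  assert (HTp : 0 < IZR T) by (apply IZR_lt; lia).
  assert (HQT : 0 <= Q / IZR T) by (apply Rmult_le_pos; [lra | left; apply Rinv_0_lt_compat; lra]).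
  set (g := fun z => Q / IZR T * s z).
  replace (Q / IZR T * (IZR y0 - Y)) with (g (x0, y0))
    by (unfold g, s, saddle; simpl; rewrite !Z.sub_diag; simpl; ring).
  set (Om := fun z : point => (0 < snd z < T)%Z /\ ~ W z).
  destruct W_bounded as [X HX].
  apply (comparison_principle Om
           (list_prod (map (fun i => (Z.of_nat i - X)%Z) (seq 0 (Z.to_nat (2 * X + 1))))
                      (map Z.of_nat (seq 0 (Z.to_nat T))))).
  - intros [x y] [Hy Hn]. simpl in Hy. apply in_prod; apply in_map_iff.
    + exists (Z.to_nat (x + X)). split; [|apply in_seq]; destruct (Z_le_gt_dec (Z.abs x) X);
        try lia; exfalso; apply Hn, HX; simpl; lia.
    + exists (Z.to_nat y). split; [lia | apply in_seq; lia].
  - intros z _. unfold g. rewrite avg4_scal. unfold s. rewrite saddle_harmonic. lra.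
  - intros z [Hz Hn]. rewrite <- v_harmonic; auto; lra.
  - intros [a b] [x y] [Hb _] Hnb Hn. simpl in Hb.
    assert (Hy : (0 <= y <= T)%Z)
      by (destruct Hnb as [E|[E|[E|E]]]; injection E; intros; subst; lia).
    unfold g. destruct (classic (W (x, y))) as [HWw|HWw].
    + rewrite v_W by auto. pose proof (saddle_nonpos_on_W (x, y) HWw Hy). nra.
    + assert (y = T).
      { destruct (Z.eq_dec y T); auto.
        destruct (Z.eq_dec y 0) as [->|]; [exfalso; apply HWw; auto|].
        exfalso; apply Hn; split; [simpl; lia | auto]. }
      subst y. destruct (saddle_top x) as [Hs1 Hs2].
      destruct (Rle_dec (IZR (Z.abs x)) B) as [Hx|Hx].
      * eapply Rle_trans; [|apply v_top; auto].
        apply Rle_trans with (Q / IZR T * IZR T); [apply Rmult_le_compat_l; auto|].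
        right; field; lra.
      * pose proof (v_ge0 (x, T)). pose proof (Hs2 ltac:(lra)). nra.
  - split; [simpl; lia | auto].
Qed.

End Barrier.

(** * A lower bound for escaping through a high window *)

Lemma saddle_coefficient_bound (y0 Y P T D d : R) :
  0 < y0 -> 0 < Y -> Y <= y0 -> y0 <= P -> y0 ^ 3 <= Y * P ^ 2 ->
  2 * y0 <= T <= 4 * y0 -> 7 * P <= D -> D <= Rabs d ->
  T <= Y / (9 * y0 ^ 2) * (d ^ 2 - (T - y0) ^ 2).
Proof.
  intros H1 H2 H3 H4 H5 H6 H7 H8.
  assert (Hd : 49 * P ^ 2 <= d ^ 2) by (rewrite <- (pow2_abs d); nra).
  assert (Hy2 : 0 < y0 ^ 2) by (apply pow_lt; lra).
  apply Rmult_le_reg_l with (9 * y0 ^ 2); [lra|].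
  replace (9 * y0 ^ 2 * (Y / (9 * y0 ^ 2) * (d ^ 2 - (T - y0) ^ 2)))
    with (Y * (d ^ 2 - (T - y0) ^ 2)) by (field; lra).
  assert ((T - y0) ^ 2 <= 9 * y0 ^ 2) by nra.
  assert (9 * y0 ^ 2 <= 9 * P ^ 2) by nra.
  assert (Y * (d ^ 2 - (T - y0) ^ 2) >= Y * (40 * P ^ 2)) by nra.
  assert (9 * y0 ^ 2 * T <= 36 * y0 ^ 3) by nra.
  nra.
Qed.

Section LowerBound.

Variables (alpha : R) (h0 : Z).
Hypothesis alpha_gt1 : 1 < alpha.
Hypothesis h0_ge0 : (0 <= h0)%Z.

Let W := What alpha h0.

(* [15 = 8 + 7]: obstacle points beyond [15 * width j] are at distance at least [7 * width j]
   from every start point [|x0| <= 8 * width j]. *)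
Definition admissible (j : nat) : Prop :=
  15 * width alpha j <= Rpower (low_height alpha j / 2) alpha /\
  IZR h0 <= low_height alpha j / 2 /\ kap alpha * rho alpha j <= 1 / 2.

Lemma eventually_admissible : eventually admissible.
Proof.
  destruct (eventually_and _ _ (eventually_width_small alpha alpha_gt1 15)
             (eventually_and _ _ (eventually_low_height_ge alpha alpha_gt1 (IZR h0))
                (eventually_kap_rho alpha alpha_gt1))) as [J0 H].
  exists J0. exact H.
Qed.

Section Harmonic.

Variables (N : Z) (v : point -> R).
Hypothesis v_ge0 : forall z, 0 <= v z.
Hypothesis v_W : forall z, W z -> v z = 0.
Hypothesis v_harmonic : forall z, (0 < snd z < N)%Z -> ~ W z -> v z = avg4 v z.

Lemma barrier_at_level (T : Z) (j : nat) (Q : R) (x0 : Z) :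
  15 * width alpha j <= Rpower (low_height alpha j / 2) alpha ->
  IZR h0 <= low_height alpha j / 2 -> (2 * dyad j <= T <= 4 * dyad j)%Z -> (T <= N)%Z -> 0 <= Q ->
  (forall x, ~ W (x, T) -> IZR (Z.abs x) <= 8 * width alpha (S j) -> Q <= v (x, T)) ->
  IZR (Z.abs x0) <= 8 * width alpha j -> ~ W (x0, dyad j) ->
  Q / IZR T * (IZR (dyad j) - low_height alpha j) <= v (x0, dyad j).
Proof.
  intros Hwid Hlow HT HTN HQ Htop Hx0 Hz0.
  pose proof (dyad_pos j) as Hy0. assert (Hy0r : 0 < IZR (dyad j)) by (apply IZR_lt; lia).
  pose proof (low_height_pos alpha j). pose proof (low_height_le_dyad alpha alpha_gt1 j).
  pose proof (dyad_le_width alpha alpha_gt1 j). pose proof (dyad_cube_le alpha alpha_gt1 j).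
  pose proof (width_S_bounds alpha alpha_gt1 j).
  assert (HTr : 2 * IZR (dyad j) <= IZR T <= 4 * IZR (dyad j))
    by (split; rewrite <- mult_IZR; apply IZR_le; lia).
  assert (Hy2 : 0 < IZR (dyad j) ^ 2) by (apply pow_lt; lra).
  set (c := low_height alpha j / (9 * IZR (dyad j) ^ 2)).
  assert (Hfar : forall x, 15 * width alpha j <= IZR (Z.abs x) ->
            IZR T <= c * (IZR (x - x0) ^ 2 - IZR (T - dyad j) ^ 2)).
  { intros x Hx. rewrite minus_IZR with (n := T).
    apply (saddle_coefficient_bound _ _ (width alpha j) _ (7 * width alpha j)); auto; try lra.
    rewrite <- abs_IZR. assert (Htri : (Z.abs x <= Z.abs (x - x0) + Z.abs x0)%Z) by lia.
    apply IZR_le in Htri. rewrite plus_IZR in Htri. lra. }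
  apply (barrier_lower_bound W v x0 (dyad j) T (low_height alpha j) c Q (8 * width alpha (S j)));
    auto; try lia.
  - unfold c. apply Rdiv_lt_0_compat; lra.
  - unfold c. replace (low_height alpha j / (9 * IZR (dyad j) ^ 2) * IZR (dyad j) ^ 2)
      with (low_height alpha j / 9) by (field; lra). lra.
  - unfold c. rewrite minus_IZR.
    apply Rmult_le_reg_l with (9 * IZR (dyad j) ^ 2); [lra|].
    replace (9 * IZR (dyad j) ^ 2 * (low_height alpha j / (9 * IZR (dyad j) ^ 2)
               * (IZR T - IZR (dyad j)) ^ 2))
      with (low_height alpha j * (IZR T - IZR (dyad j)) ^ 2) by (field; lra).
    assert ((IZR T - IZR (dyad j)) ^ 2 <= 9 * IZR (dyad j) ^ 2) by nra. nra.
  - intros [x y] HW Hy HY. cbn [fst snd] in *. apply Hfar.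
    pose proof (What_high alpha h0 alpha_gt1 h0_ge0 x y HW ltac:(apply lt_IZR; lra)).
    assert (Rpower (low_height alpha j / 2) alpha <= Rpower (IZR y) alpha)
      by (apply Rle_Rpower_l; lra).
    lra.
  - intros x Hx. apply Hfar. lra.
  - destruct (What_far alpha h0 alpha_gt1 T ltac:(lia)) as [X [_ HX]]. exists X. exact HX.
  - intros x. apply What_bottom; auto.
  - intros z Hz Hn. apply v_harmonic; auto. lia.
Qed.

(* Climbing from height [2^j] to [2^(j+1)] costs a factor [1 - rho j], and
   [prod_(i >= j) (1 - rho i) >= 1 - kap * rho j]. *)
Definition level_bound (j : nat) : R := IZR (dyad j) / IZR N * (1 - kap alpha * rho alpha j).

Lemma level_chain (J J0 : nat) :
  (forall j, (J0 <= j)%nat -> admissible j) ->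
  (2 * dyad J <= N < 4 * dyad J)%Z ->
  (forall x, ~ W (x, N) -> IZR (Z.abs x) <= 8 * width alpha (S J) -> 1 <= v (x, N)) ->
  forall j, (J0 <= j <= J)%nat ->
  forall x0, IZR (Z.abs x0) <= 8 * width alpha j -> ~ W (x0, dyad j) ->
  level_bound j <= v (x0, dyad j).
Proof.
  intros Hadm HN Htop j Hj. remember (J - j)%nat as d eqn:Hd. revert j Hj Hd.
  pose proof (kap_ge1 alpha alpha_gt1).
  induction d as [|d IH]; intros j Hj Hd x0 Hx0 Hz0;
    destruct (Hadm j ltac:(lia)) as [Hwid [Hlow Hkr]];
    pose proof (dyad_pos j) as Hy0; assert (Hy0r : 0 < IZR (dyad j)) by (apply IZR_lt; lia);
    assert (HNp : 0 < IZR N) by (apply IZR_lt; lia);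
    pose proof (rho_pos alpha j); unfold level_bound.
  - assert (j = J) by lia. subst j.
    eapply Rle_trans; [|apply (barrier_at_level N J 1 x0); auto; first [lia | lra]].
    rewrite low_height_eq. replace (1 / IZR N * (IZR (dyad J) - rho alpha J * IZR (dyad J)))
      with (IZR (dyad J) / IZR N * (1 - rho alpha J)) by (field; lra).
    apply Rmult_le_compat_l; [apply Rle_mult_inv_pos | ]; nra.
  - destruct (Hadm (S j) ltac:(lia)) as [_ [_ Hkr']].
    assert (HQ : 0 <= level_bound (S j)).
    { unfold level_bound. apply Rmult_le_pos; [|lra]. apply Rle_mult_inv_pos; [|lra].
      apply IZR_le. pose proof (dyad_pos (S j)); lia. }
    pose proof (dyad_mono (S j) J ltac:(lia)).
    eapply Rle_trans;
      [|apply (barrier_at_level (dyad (S j)) j (level_bound (S j)) x0); auto;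
        [rewrite dyad_S; lia | lia | intros x Hn Hx; apply (IH (S j)); auto; lia]].
    unfold level_bound. rewrite low_height_eq, dyad_S, mult_IZR.
    pose proof (rho_product_step alpha alpha_gt1 j).
    replace (IZR 2 * IZR (dyad j) / IZR N * (1 - kap alpha * rho alpha (S j))
             / (IZR 2 * IZR (dyad j)) * (IZR (dyad j) - rho alpha j * IZR (dyad j)))
      with (IZR (dyad j) / IZR N * ((1 - kap alpha * rho alpha (S j)) * (1 - rho alpha j)))
      by (field; lra).
    apply Rmult_le_compat_l; [apply Rle_mult_inv_pos|]; lra.
Qed.

Lemma axis_walk (m : nat) (y : Z) : (h0 < y)%Z -> (y + Z.of_nat m < N)%Z ->
  (/ 4) ^ m * v (0%Z, (y + Z.of_nat m)%Z) <= v (0%Z, y).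
Proof.
  revert y. induction m as [|m IH]; intros y Hy HyN.
  - simpl. replace (y + 0)%Z with y by lia. lra.
  - specialize (IH (y + 1)%Z ltac:(lia) ltac:(lia)).
    replace (y + 1 + Z.of_nat m)%Z with (y + Z.of_nat (S m))%Z in IH by lia.
    rewrite (v_harmonic (0%Z, y)); [|simpl; lia | apply What_axis; auto].
    unfold avg4. simpl pow.
    pose proof (v_ge0 ((0 + 1)%Z, y)). pose proof (v_ge0 ((0 - 1)%Z, y)).
    pose proof (v_ge0 (0%Z, (y - 1)%Z)). lra.
Qed.

End Harmonic.

Definition window_escape_bound (cst : R) (Nmin : Z) : Prop :=
  forall N, (Nmin <= N)%Z ->
  forall v : point -> R, (forall z, 0 <= v z) -> (forall z, W z -> v z = 0) ->
  (forall z, (0 < snd z < N)%Z -> ~ W z -> v z = avg4 v z) ->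
  (forall x, ~ W (x, N) -> IZR (Z.abs x) <= 8 * width alpha (S (level N)) -> 1 <= v (x, N)) ->
  cst / IZR N <= v (0%Z, (h0 + 1)%Z).

Lemma escape_lower_bound :
  exists cst, 0 < cst /\ exists Nmin, (2 <= Nmin)%Z /\ window_escape_bound cst Nmin.
Proof.
  destruct eventually_admissible as [J0 HJ0].
  destruct (HJ0 J0 (le_n _)) as [_ [Hlow Hkr]].
  pose proof (low_height_le_dyad alpha alpha_gt1 J0). pose proof (dyad_pos J0).
  assert (Hhy : (h0 < dyad J0)%Z).
  { apply lt_IZR. assert (0 < IZR (dyad J0)) by (apply IZR_lt; lia). lra. }
  set (m := Z.to_nat (dyad J0 - h0 - 1)).
  exists ((/ 4) ^ m * IZR (dyad J0) / 2). split.
  { apply Rmult_lt_0_compat; [|lra].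
    apply Rmult_lt_0_compat; [apply pow_lt; lra | apply IZR_lt; lia]. }
  exists (dyad (S J0)). split; [rewrite dyad_S; lia|].
  unfold window_escape_bound. intros N HN v Hv0 HvW Hvh Htop.
  assert (HN2 : (2 <= N)%Z) by (rewrite dyad_S in HN; lia).
  pose proof (level_spec N HN2) as HJ. pose proof (level_ge J0 N HN) as HJJ.
  assert (HNp : 0 < IZR N) by (apply IZR_lt; lia).
  pose proof (level_chain N v Hv0 HvW Hvh (level N) J0 HJ0 HJ Htop J0 ltac:(lia) 0%Z
     ltac:(simpl; pose proof (width_pos alpha J0); lra)
     (What_axis alpha h0 h0_ge0 _ Hhy)) as Hc.
  pose proof (dyad_mono J0 (level N) HJJ).
  assert (Hw := axis_walk N v Hv0 Hvh m (h0 + 1)%Z ltac:(lia)).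
  replace (h0 + 1 + Z.of_nat m)%Z with (dyad J0) in Hw by (unfold m; lia).
  specialize (Hw ltac:(lia)).
  unfold level_bound in Hc.
  eapply Rle_trans; [|apply Hw].
  assert (Hpm : 0 < (/ 4) ^ m) by (apply pow_lt; lra).
  assert (IZR (dyad J0) / IZR N * (1 / 2)
          <= IZR (dyad J0) / IZR N * (1 - kap alpha * rho alpha J0)).
  { apply Rmult_le_compat_l; [apply Rle_mult_inv_pos; [apply IZR_le; lia | lra] | lra]. }
  replace ((/ 4) ^ m * IZR (dyad J0) / 2 / IZR N)
    with ((/ 4) ^ m * (IZR (dyad J0) / IZR N * (1 / 2))) by (field; lra).
  apply Rmult_le_compat_l; lra.
Qed.

Lemma ProbBefore_line_lower (cst : R) (Nmin : Z) : window_escape_bound cst Nmin ->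
  forall N, (Nmin <= N)%Z -> (0 < N)%Z -> cst / 4 / IZR N <= ProbBefore (0%Z, h0) (Lline N) W.
Proof.
  intros Hesc N HN HNp.
  set (v := barProbBefore W (Lline N)).
  assert (Hv : cst / IZR N <= v (0%Z, (h0 + 1)%Z)).
  { apply (Hesc N HN v).
    - intros; apply barProbBefore_ge0.
    - intros; apply barProbBefore_in_A; auto.
    - intros z Hz Hn. apply barProbBefore_harmonic; auto. unfold Lline. lia.
    - intros x Hn _. unfold v. rewrite barProbBefore_in_B; [lra | auto | reflexivity]. }
  assert (Hge : forall z, 0 <= v z) by (intros; apply barProbBefore_ge0).
  rewrite ProbBefore_avg4. fold v. unfold avg4.
  pose proof (Hge ((0 + 1)%Z, h0)). pose proof (Hge ((0 - 1)%Z, h0)).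
  pose proof (Hge (0%Z, (h0 - 1)%Z)).
  assert (0 < IZR N) by (apply IZR_lt; lia).
  replace (cst / 4 / IZR N) with (/ 4 * (cst / IZR N)) by (field; lra). lra.
Qed.

Lemma window_params : exists N1, (2 <= N1)%Z /\ forall N, (N1 <= N)%Z ->
  IZR N <= 8 * width alpha (S (level N)) /\
  2 * (8 * width alpha (S (level N))) <= Rpower (IZR N / 2) alpha /\ IZR h0 < IZR N / 2.
Proof.
  destruct (eventually_and _ _ (eventually_width_small alpha alpha_gt1 64)
              (eventually_low_height_ge alpha alpha_gt1 (IZR h0))) as [J0 HJ0].
  exists (dyad (S J0)). split; [rewrite dyad_S; pose proof (dyad_pos J0); lia|].
  intros N HN. pose proof (level_ge J0 N HN) as HJJ.
  assert (HN2 : (2 <= N)%Z) by (rewrite dyad_S in HN; pose proof (dyad_pos J0); lia).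
  pose proof (level_spec N HN2) as HJ. set (J := level N) in *.
  destruct (HJ0 J HJJ) as [Hwid Hlow].
  pose proof (dyad_le_width alpha alpha_gt1 (S J)) as HdS. rewrite dyad_S, mult_IZR in HdS.
  pose proof (width_S_bounds alpha alpha_gt1 J). pose proof (low_height_le_dyad alpha alpha_gt1 J).
  pose proof (low_height_pos alpha J). pose proof (dyad_pos J).
  assert (Hy : 0 < IZR (dyad J)) by (apply IZR_lt; lia).
  assert (HNr : 2 * IZR (dyad J) <= IZR N < 4 * IZR (dyad J))
    by (split; rewrite <- mult_IZR; [apply IZR_le | apply IZR_lt]; lia).
  split; [lra | split; [|lra]].
  assert (Rpower (low_height alpha J / 2) alpha <= Rpower (IZR N / 2) alpha)
    by (apply Rle_Rpower_l; lra).
  lra.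
Qed.

End LowerBound.

(** * The harmonic measure seen from far lines *)

Definition symsum (g : Z -> R) (M : nat) : R := zsum (- Z.of_nat M) (2 * M) g.

Lemma symsum_S (g : Z -> R) (M : nat) :
  symsum g (S M) = g (- Z.of_nat (S M))%Z + symsum g M + g (Z.of_nat (S M)).
Proof.
  unfold symsum. replace (2 * S M)%nat with (S (S (2 * M))) by lia.
  rewrite zsum_S, zsum_Sl. replace (- Z.of_nat (S M) + 1)%Z with (- Z.of_nat M)%Z by lia.
  f_equal. f_equal. lia.
Qed.

Lemma Plim_symsum (g : Z -> R) (X : Z) :
  (0 <= X)%Z -> (forall x, (X < Z.abs x)%Z -> g x = 0) ->
  Plim (fun M => sum_f_R0 (fun i => g (Z.of_nat i - Z.of_nat M)%Z) (2 * M))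
  = zsum (- X) (Z.to_nat (2 * X)) g.
Proof.
  intros HX Hg.
  assert (Hstable : forall r, symsum g (Z.to_nat X + r) = symsum g (Z.to_nat X)).
  { induction r as [|r IH]; [rewrite Nat.add_0_r; reflexivity|].
    rewrite Nat.add_succ_r, symsum_S, IH, !Hg by lia. ring. }
  apply Plim_eq. intros e He. exists (Z.to_nat X). intros n Hn.
  replace (sum_f_R0 (fun i => g (Z.of_nat i - Z.of_nat n)%Z) (2 * n)) with (symsum g n)
    by (apply sum_eq; intros i _; f_equal; lia).
  replace n with (Z.to_nat X + (n - Z.to_nat X))%nat by lia. rewrite Hstable.
  unfold symsum. replace (- Z.of_nat (Z.to_nat X))%Z with (- X)%Z by lia.
  replace (2 * Z.to_nat X)%nat with (Z.to_nat (2 * X)) by lia.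
  unfold R_dist. rewrite Rminus_diag, Rabs_R0. lra.
Qed.

Lemma Rabs_second_difference (t : Z) :
  Rabs (IZR t + 1) + Rabs (IZR t - 1) - 2 * Rabs (IZR t) = pif (t = 0%Z) 2 0.
Proof.
  destruct (Z.eq_dec t 0) as [->|Hn].
  - rewrite pif_true by auto. simpl. rewrite Rplus_0_l, Rminus_0_l, Rabs_R0, Rabs_Ropp, Rabs_R1.
    ring.
  - rewrite pif_false by auto. destruct (Z_lt_le_dec 0 t).
    + assert (1 <= IZR t) by (apply IZR_le; lia). rewrite !Rabs_right by lra. ring.
    + assert (IZR t <= -1) by (apply IZR_le; lia). rewrite !Rabs_left1 by lra. ring.
Qed.

Section Flux.

Variables (alpha : R) (h0 N : Z) (B : R).
Hypothesis alpha_gt1 : 1 < alpha.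
Hypothesis h0_ge0 : (0 <= h0)%Z.
Hypothesis N_pos : (0 < N)%Z.
Hypothesis N_le_B : IZR N <= B.
Hypothesis B_small : 2 * B <= Rpower (IZR N / 2) alpha.
Hypothesis h0_small : IZR h0 < IZR N / 2.

Let W := What alpha h0.

Definition tent (z : point) : R :=
  2 * (IZR N / 4 - Rabs (IZR (snd z - N))
       - IZR N / (8 * B ^ 2) * (IZR (fst z) ^ 2 - IZR (snd z - N) ^ 2)).

Lemma tent_defect (z : point) : tent z <= avg4 tent z + pif (snd z = N) 1 0.
Proof.
  assert (HB : 0 < B) by (assert (0 < IZR N) by (apply IZR_lt; lia); lra).
  destruct z as [a b]. unfold avg4, tent. simpl.
  rewrite ?minus_IZR, ?plus_IZR.
  pose proof (Rabs_second_difference (b - N)) as E. rewrite minus_IZR in E.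
  replace (IZR b + 1 - IZR N) with (IZR b - IZR N + 1) by ring.
  replace (IZR b - 1 - IZR N) with (IZR b - IZR N - 1) by ring.
  replace (pif (b - N = 0)%Z 2 0) with (2 * pif (b = N) 1 0) in E
    by (unfold pif; destruct (excluded_middle_informative (b - N = 0)%Z);
        destruct (excluded_middle_informative (b = N)); try lia; lra).
  set (t := IZR b - IZR N) in *.
  match goal with |- ?L <= ?R + _ =>
    assert (Hd : R - L = - (Rabs (t + 1) + Rabs (t - 1) - 2 * Rabs t) / 2) by (field; lra) end.
  lra.
Qed.

Lemma tent_on_window (x : Z) : IZR (Z.abs x) <= B -> IZR N / 4 <= tent (x, N).
Proof.
  intros Hx. assert (Hn : 0 < IZR N) by (apply IZR_lt; lia).
  unfold tent; cbn [fst snd]. rewrite Z.sub_diag, Rabs_R0. simpl IZR.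
  assert (IZR x ^ 2 <= B ^ 2).
  { rewrite <- (pow2_abs (IZR x)), <- abs_IZR.
    assert (0 <= IZR (Z.abs x)) by (apply IZR_le; lia). nra. }
  assert (IZR N / (8 * B ^ 2) * IZR x ^ 2 <= IZR N / 8).
  { replace (IZR N / 8) with (IZR N / (8 * B ^ 2) * B ^ 2) by (field; lra).
    apply Rmult_le_compat_l; auto. left; apply Rdiv_lt_0_compat; [lra | nra]. }
  nra.
Qed.

Lemma tent_coefficient : 0 < IZR N / (8 * B ^ 2) /\ IZR N / (8 * B ^ 2) * IZR N <= 1 / 8.
Proof.
  assert (Hn : 0 < IZR N) by (apply IZR_lt; lia).
  split; [apply Rdiv_lt_0_compat; [lra | nra]|].
  apply Rmult_le_reg_r with (8 * B ^ 2); [nra|].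
  replace (IZR N / (8 * B ^ 2) * IZR N * (8 * B ^ 2)) with (IZR N * IZR N) by (field; nra).
  nra.
Qed.

Lemma tent_nonpos_off_band (x y : Z) : (0 <= y <= 2 * N)%Z ->
  IZR N / 2 <= Rabs (IZR (y - N)) -> tent (x, y) <= 0.
Proof.
  intros Hy Ht. unfold tent; cbn [fst snd].
  destruct tent_coefficient as [Hk Hkn]. set (k := IZR N / (8 * B ^ 2)) in *.
  assert (Hta : Rabs (IZR (y - N)) <= IZR N).
  { rewrite minus_IZR. apply Rabs_le.
    assert (0 <= IZR y <= 2 * IZR N) by (split; [|rewrite <- mult_IZR]; apply IZR_le; lia). lra. }
  assert (Hkt : k * IZR (y - N) ^ 2 <= Rabs (IZR (y - N)) / 8).
  { rewrite <- (pow2_abs (IZR (y - N))).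
    assert (0 <= k * Rabs (IZR (y - N))) by (apply Rmult_le_pos; [lra | apply Rabs_pos]).
    simpl. nra. }
  assert (0 <= k * IZR x ^ 2) by (apply Rmult_le_pos; [lra | apply pow2_ge_0]).
  lra.
Qed.

Lemma tent_nonpos_far_out (x y : Z) : (0 <= y <= 2 * N)%Z ->
  2 * B <= IZR (Z.abs x) -> tent (x, y) <= 0.
Proof.
  intros Hy Hx. unfold tent; cbn [fst snd].
  destruct tent_coefficient as [Hk Hkn]. set (k := IZR N / (8 * B ^ 2)) in *.
  assert (Hn : 0 < IZR N) by (apply IZR_lt; lia).
  assert (HkB : k * B ^ 2 = IZR N / 8) by (unfold k; field; nra).
  assert (4 * B ^ 2 <= IZR x ^ 2) by (rewrite <- (pow2_abs (IZR x)), <- abs_IZR; nra).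
  assert (Hkx : IZR N / 2 <= k * IZR x ^ 2) by nra.
  assert (Hta : Rabs (IZR (y - N)) <= IZR N).
  { rewrite minus_IZR. apply Rabs_le.
    assert (0 <= IZR y <= 2 * IZR N) by (split; [|rewrite <- mult_IZR]; apply IZR_le; lia). lra. }
  assert (Hkt : k * IZR (y - N) ^ 2 <= IZR N / 8).
  { rewrite <- (pow2_abs (IZR (y - N))). pose proof (Rabs_pos (IZR (y - N))).
    assert (k * Rabs (IZR (y - N)) ^ 2 <= k * IZR N * IZR N)
      by (simpl; rewrite Rmult_1_r, Rmult_assoc; apply Rmult_le_compat_l; nra).
    nra. }
  pose proof (Rabs_pos (IZR (y - N))). lra.
Qed.

Lemma tent_nonpos (x y : Z) : (0 <= y <= 2 * N)%Z -> W (x, y) \/ y = (2 * N)%Z ->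
  tent (x, y) <= 0.
Proof.
  intros Hy HW. assert (Hn : 0 < IZR N) by (apply IZR_lt; lia).
  destruct (Rle_dec (IZR N / 2) (Rabs (IZR (y - N)))) as [Hc|Hc];
    [apply tent_nonpos_off_band; auto|].
  assert (Hty : IZR N / 2 < IZR y) by (rewrite minus_IZR in Hc; split_Rabs; lra).
  destruct HW as [HW|HW].
  2:{ exfalso. subst y. rewrite minus_IZR, mult_IZR, Rabs_right in Hc by lra. lra. }
  apply tent_nonpos_far_out; auto.
  pose proof (What_high alpha h0 alpha_gt1 h0_ge0 x y HW ltac:(apply lt_IZR; lra)).
  assert (Rpower (IZR N / 2) alpha <= Rpower (IZR y) alpha)
    by (apply Rle_Rpower_l; lra).
  lra.
Qed.

Definition window_escape : point -> R :=
  barProbBefore (setU W (fun w => snd w = N /\ B < IZR (Z.abs (fst w))))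
                (fun w => snd w = N /\ IZR (Z.abs (fst w)) <= B).

Let u := window_escape.

Lemma window_escape_ge0 (z : point) : 0 <= u z.
Proof. apply barProbBefore_ge0. Qed.

Lemma window_escape_W (z : point) : W z -> u z = 0.
Proof. intros Hz. apply barProbBefore_in_A. left; auto. Qed.

Lemma window_escape_harmonic (z : point) : (0 < snd z < N)%Z -> ~ W z -> u z = avg4 u z.
Proof.
  intros Hz Hn. apply barProbBefore_harmonic.
  - intros [H|[H _]]; [tauto | lia].
  - intros [H _]; lia.
Qed.

Lemma window_escape_top (x : Z) :
  (~ W (x, N) -> IZR (Z.abs x) <= B -> u (x, N) = 1) /\ (B < IZR (Z.abs x) -> u (x, N) = 0).
Proof.
  split.
  - intros Hn Hx. apply barProbBefore_in_B; [|split; auto].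
    intros [H|[_ H]]; [tauto | simpl in H; lra].
  - intros Hx. apply barProbBefore_in_A. right. split; auto.
Qed.

Definition flux_test (z : point) : R :=
  Rmax 0 (Rmax (tent z) (pif (snd z <= N)%Z (IZR N / 4 * u z) 0)).

Let phi := flux_test.

Definition flux_domain (z : point) : Prop := (0 < snd z < 2 * N)%Z /\ ~ W z.

Let Om := flux_domain.

Lemma flux_test_ge0 (z : point) : 0 <= phi z.
Proof. apply Rmax_l. Qed.

Lemma flux_test_ge_escape (z : point) : (snd z <= N)%Z -> IZR N / 4 * u z <= phi z.
Proof.
  intros Hz. unfold phi, flux_test. eapply Rle_trans; [|apply Rmax_r].
  eapply Rle_trans; [|apply Rmax_r]. rewrite pif_true by auto. lra.
Qed.

Lemma flux_test_vanishes (z : point) : (0 <= snd z <= 2 * N)%Z -> ~ Om z -> phi z = 0.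
Proof.
  destruct z as [x y]. intros Hy Hno. cbn [fst snd] in Hy.
  assert (Hc : W (x, y) \/ y = (2 * N)%Z).
  { destruct (classic (W (x, y))) as [|HW]; [left; auto | right].
    destruct (Z.eq_dec y 0) as [->|]; [exfalso; apply HW, What_bottom; auto|].
    destruct (Z.eq_dec y (2 * N)); auto. exfalso. apply Hno. split; [cbn [fst snd]; lia | auto]. }
  pose proof (tent_nonpos x y Hy Hc).
  assert (Hu : pif (y <= N)%Z (IZR N / 4 * u (x, y)) 0 = 0).
  { unfold pif. destruct (excluded_middle_informative (y <= N)%Z); [|auto].
    destruct Hc as [Hw|Hw]; [rewrite window_escape_W; auto; ring | lia]. }
  unfold phi, flux_test. cbn [snd]. rewrite Hu.
  rewrite (Rmax_right (tent (x, y)) 0), Rmax_left; lra.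
Qed.

(* Below the line [y = N] the escape term is harmonic; on the line it is at most [N / 4],
   which [tent] dominates on the window, and it vanishes off the window. *)
Lemma flux_test_defect (z : point) : Om z -> phi z - avg4 phi z <= pif (snd z = N) 1 0.
Proof.
  destruct z as [a b]. intros [Hb Hw]. cbn [fst snd] in Hb |- *.
  assert (Hn : 0 < IZR N) by (apply IZR_lt; lia).
  assert (Hind : 0 <= pif (b = N) 1 0)
    by (unfold pif; destruct (excluded_middle_informative (b = N)); lra).
  assert (Hav0 : 0 <= avg4 phi (a, b)) by (apply avg4_ge0, flux_test_ge0).
  assert (Htent : tent (a, b) <= avg4 phi (a, b) + pif (b = N) 1 0).
  { eapply Rle_trans; [apply tent_defect|]. cbn [snd].
    apply Rplus_le_compat_r, avg4_le_compat. intros w _. unfold phi, flux_test.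
    eapply Rle_trans; [apply Rmax_l | apply Rmax_r]. }
  assert (Hesc : pif (b <= N)%Z (IZR N / 4 * u (a, b)) 0 <= avg4 phi (a, b) + pif (b = N) 1 0).
  { destruct (Z_le_gt_dec b N) as [Hle|Hgt];
      [rewrite pif_true by auto | rewrite pif_false by lia; lra].
    destruct (Z.eq_dec b N) as [->|Hne].
    - destruct (window_escape_top a) as [Hin Hout].
      destruct (Rle_dec (IZR (Z.abs a)) B) as [Hx|Hx].
      + rewrite Hin by auto. pose proof (tent_on_window a Hx). lra.
      + rewrite Hout by lra. lra.
    - rewrite (window_escape_harmonic (a, b)) by (simpl; auto; lia).
      rewrite <- avg4_scal.
      assert (avg4 (fun w => IZR N / 4 * u w) (a, b) <= avg4 phi (a, b)).
      { apply avg4_le_compat. intros w Hw'. apply flux_test_ge_escape.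
        destruct Hw' as [E|[E|[E|E]]]; subst w; cbn [snd]; lia. }
      rewrite pif_false by auto. lra. }
  unfold phi at 1, flux_test. cbn [snd].
  assert (Rmax 0 (Rmax (tent (a, b)) (pif (b <= N)%Z (IZR N / 4 * u (a, b)) 0))
          <= avg4 phi (a, b) + pif (b = N) 1 0) by (apply Rmax_lub; [lra | apply Rmax_lub; lra]).
  lra.
Qed.

(* Green's identity on [flux_domain] with [h = P_.(S_tau = (0, h0))]: the exit edge from
   [(0, h0 + 1)] to [(0, h0)], where [h = 1], is controlled by the mass of [h] on the line
   [y = N], which is [Hbar]. *)
Lemma Hbar_ge_flux_test : phi (0%Z, (h0 + 1)%Z) <= 4 * Hbar W N (0%Z, h0).
Proof.
  set (h := fun z => HitProb z (setU W (Lline 0)) (0%Z, h0)).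
  assert (HhN : (2 * h0 < N)%Z) by (apply lt_IZR; rewrite mult_IZR; lra).
  destruct (What_far alpha h0 alpha_gt1 (2 * N) ltac:(lia)) as [X [HX0 HX]].
  assert (HOm : forall z, Om z -> (Z.abs (fst z) < X + 1)%Z /\ (0 < snd z < 2 * N)%Z).
  { intros z [H1 H2]. split; auto. destruct (Z_le_gt_dec (Z.abs (fst z)) X); [lia|].
    exfalso. apply H2, HX; lia. }
  assert (Hstart : h (0%Z, h0) = 1).
  { unfold h. rewrite HitProb_in_A; [apply pif_true; auto | left; apply What_start; auto]. }
  assert (HOmN : Om (0%Z, (h0 + 1)%Z)) by (split; [cbn [snd]; lia | apply What_axis; auto; lia]).
  assert (Hnb : neighbor (0%Z, (h0 + 1)%Z) (0%Z, h0)) by (right; right; right; f_equal; lia).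
  assert (Hout : ~ Om (0%Z, h0)) by (intros [_ Hw]; apply Hw, What_start; auto).
  assert (Hh_harm : forall z, Om z -> h z = avg4 h z).
  { intros z [H1 H2]. apply HitProb_harmonic. intros [H|H]; [tauto | unfold Lline in H; lia]. }
  assert (Hphi_bd : forall z w, Om z -> neighbor z w -> ~ Om w -> phi w = 0).
  { intros [a b] w [Hb _] Hw Hnw. apply flux_test_vanishes; auto.
    cbn [snd] in Hb. destruct Hw as [E|[E|[E|E]]]; subst w; cbn [snd]; lia. }
  pose proof (boundary_edge_le_flux Om (X + 1) (2 * N) phi h HOm
                (fun z => HitProb_ge0 _ _ _) flux_test_ge0 Hphi_bd _ _ HOmN Hnb Hout) as Hflux.
  rewrite Hstart, Rmult_1_r, green_identity in Hflux by (auto; lia).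
  eapply Rle_trans; [apply Hflux|]. eapply Rle_trans;
    [apply (defect_sum_le_line Om (X + 1) (2 * N) phi h (fun z => HitProb_ge0 _ _ _) N);
     [lia | apply flux_test_defect] |].
  - right. f_equal. unfold Hbar.
    rewrite (Plim_symsum _ (X + 1)); [| lia |].
    + apply zsum_ext. intros x _. unfold HbarTerm, Om, flux_domain. fold W. unfold pif.
      destruct (excluded_middle_informative (W (x, N))) as [Hw|Hw];
      destruct (excluded_middle_informative ((0 < snd (x, N) < 2 * N)%Z /\ ~ W (x, N))) as [Ho|Ho];
      cbn [snd] in *; try tauto; [exfalso; apply Ho; split; auto; lia].
    + intros x Hx. unfold HbarTerm. fold W. rewrite pif_true; auto.
      apply HX; cbn [fst snd]; lia.
Qed.

End Flux.

Lemma Hbar_lower_bound (alpha : R) (h0 : Z) (cst : R) (Nmin : Z) :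
  1 < alpha -> (0 <= h0)%Z -> window_escape_bound alpha h0 cst Nmin ->
  exists N0, forall N, (N0 <= N)%Z -> cst / 16 <= Hbar (What alpha h0) N (0%Z, h0).
Proof.
  intros Ha Hh Hesc. destruct (window_params alpha h0 Ha) as [N1 [HN1 Hp]].
  exists (Z.max Nmin N1). intros N HN.
  destruct (Hp N ltac:(lia)) as [HnB [HB2 Hh2]].
  set (B := 8 * width alpha (S (level N))) in *.
  assert (HNp : (0 < N)%Z) by lia. assert (Hn : 0 < IZR N) by (apply IZR_lt; lia).
  assert (HhN : (2 * h0 < N)%Z) by (apply lt_IZR; rewrite mult_IZR; lra).
  assert (Hu : cst / IZR N <= window_escape alpha h0 N B (0%Z, (h0 + 1)%Z)).
  { apply (Hesc N ltac:(lia)).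
    - apply window_escape_ge0.
    - apply window_escape_W.
    - apply window_escape_harmonic.
    - intros x H1 H2.
      rewrite (proj1 (window_escape_top alpha h0 N B x)); [lra | exact H1 | exact H2]. }
  pose proof (Hbar_ge_flux_test alpha h0 N B Ha Hh HNp HnB HB2 Hh2) as Hflux.
  pose proof (flux_test_ge_escape alpha h0 N B (0%Z, (h0 + 1)%Z) ltac:(cbn [snd]; lia)).
  assert (IZR N / 4 * (cst / IZR N) <= IZR N / 4 * window_escape alpha h0 N B (0%Z, (h0 + 1)%Z))
    by (apply Rmult_le_compat_l; lra).
  replace (IZR N / 4 * (cst / IZR N)) with (cst / 4) in * by (field; lra).
  lra.
Qed.

Theorem mainTheorem5 (alpha : R) (h0 : Z) (Halpha : 1 < alpha) (Hh0 : (0 <= h0)%Z) :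
  exists c : R, 0 < c /\
    (exists K : nat, forall k : nat, (K <= k)%nat ->
        ProbBefore (0%Z, h0) (Lline (2 ^ Z.of_nat k)%Z) (What alpha h0)
          >= c * / 2 ^ k) /\
    (exists N0 : Z, forall N : Z, (N0 <= N)%Z ->
        Hbar (What alpha h0) N (0%Z, h0) >= c).
Proof.
  destruct (escape_lower_bound alpha h0 Halpha Hh0) as [cst [Hcst [Nmin [HNmin Hesc]]]].
  exists (cst / 16). split; [lra | split].
  - exists (Z.to_nat Nmin). intros k Hk.
    assert (HN : (Nmin <= 2 ^ Z.of_nat k)%Z)
      by (pose proof (Z.pow_gt_lin_r 2 (Z.of_nat k) ltac:(lia) ltac:(lia)); lia).
    pose proof (ProbBefore_line_lower alpha h0 cst Nmin Hesc _ HN ltac:(lia)) as Hk'.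
    rewrite <- pow_IZR in Hk'. pose proof (pow_lt 2 k ltac:(lra)).
    apply Rle_ge. eapply Rle_trans; [|exact Hk'].
    unfold Rdiv. apply Rmult_le_compat_r; [left; apply Rinv_0_lt_compat|]; lra.
  - destruct (Hbar_lower_bound alpha h0 cst Nmin Halpha Hh0 Hesc) as [N0 HN0].
    exists N0. intros N HN. apply Rle_ge, HN0, HN.
Qed.
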